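(* Let $H=(E,\{X_i:i\in[n]\})$ be a hypergraph and $t_1,\dots,t_n$ integers with $0\le t_i\le|X_i|$ satisfying: (H2) $|X_i\cap X_j|\le1$ for all distinct $i,j$; (H3) there are no $a,b,c\in E$ with $\{a,b\},\{a,c\},\{b,c\}$ all hyperedges; (T) for each $i$, either $t_i=1$ or $\min\{w(e):e\in X_i\}\le t_i<|X_i|$. Let $\rho(A)=\sum_{i=1}^n\min\{|A\cap X_i|,t_i\}$ for $A\subseteq E$. Let $\sigma$ be any polymatroid on $E$ such that $\sigma(A)=\rho(A)$ for every $A\subseteq E$ satisfying at least one of: (a) $|A|\le3$; (b) $|A|=4$ and there are three hyperedges $X_h,X_i,X_j$ with $t_h=t_i=t_j=1$ such that some element of $A$ lies in exactly one of these three hyperedges and each of the other three elements of $A$ lies in exactly two of them; (c) $A\subseteq X_i$ and $|A|\le t_i+1$ for some $i\in[n]$; (d) $A\subseteq X_i\triangle X_j$ for some $i,j\in[n]$ with $X_i\cap X_j\ne\emptyset$, where $|A\cap X_i|\le t_i$ and $|A\cap X_j|\le t_j$. Then, for each positive integer $k$, from every element of $\Delta_\sigma^k$ one can construct a proper $k$-coloring $c$ of the line graph $G_H$, and this coloring satisfies $\sigma(E)\ge c_1+2c_2^+$. If $\sigma=\rho$, then the image of the map $\phi$ (defined below) on proper $k$-colorings of $G_H$ is exactly $\Delta_\rho^k$. If $\sigma(E)<\chi(G_H)$, then $\sigma$ is indecomposable.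
   Context: A polymatroid on a finite set $E$ is a function $\rho:2^E\to\mathbb{Z}$ that is normalized, non-decreasing and submodular. A hypergraph is $H=(E,\mathcal{E})$ with $E$ finite and $\mathcal{E}=\{X_i:i\in[n]\}$ a set of nonempty subsets of $E$; $w(e)$ is the number of hyperedges containing $e$; $\triangle$ is symmetric difference. The line graph $G_H$ has vertex set $[n]$ with $ij$ an edge iff $i\ne j$ and $X_i\cap X_j\ne\emptyset$. For a proper $k$-coloring $c:[n]\to[k]$, $c_1$ (resp. $c_2^+$) is the number of $i\in[k]$ with $|c^{-1}(i)|=1$ (resp. $\ge2$). $\Delta_\sigma^k$ is the set of $k$-tuples $(N_1,\dots,N_k)$ of matroids on $E$ with $\sigma=r_{N_1}+\cdots+r_{N_k}$. A polymatroid is indecomposable if it is not a sum of rank functions of finitely many matroids on $E$. The map $\phi$ sends a proper $k$-coloring $c$ to $(N_1,\dots,N_k)$ with $N_i=\bigl(\bigoplus_{h:c(h)=i}U_{t_h,X_h}\bigr)\oplus U_{0,Y}$, $Y=E-\bigcup_{h:c(h)=i}X_h$, where $U_{r,X}$ is the rank-$r$ uniform matroid on $X$. *)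

From mathcomp Require Import all_boot all_order all_algebra.
Set Implicit Arguments. Unset Strict Implicit. Unset Printing Implicit Defensive.
Import GRing.Theory Num.Theory.
Local Open Scope ring_scope.

Section Defs.
Variable E : finType.

Definition polymatroid (s : {set E} -> int) : Prop :=
  [/\ s set0 = 0,
      (forall A B : {set E}, A \subset B -> s A <= s B) &
      (forall A B : {set E}, s (A :|: B) + s (A :&: B) <= s A + s B)].

Definition matroid_rank (r : {set E} -> nat) : Prop :=
  [/\ (forall A : {set E}, (r A <= #|A|)%N),
      (forall A B : {set E}, A \subset B -> (r A <= r B)%N) &
      (forall A B : {set E}, (r (A :|: B) + r (A :&: B) <= r A + r B)%N)].

Definition in_Delta (s : {set E} -> int) (k : nat) (N : 'I_k -> {set E} -> nat) : Prop :=
  (forall i, matroid_rank (N i)) /\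
  (forall A : {set E}, s A = ((\sum_(i < k) N i A)%N)%:Z).

Definition decomposable (s : {set E} -> int) : Prop :=
  exists m : nat, exists N : 'I_m -> {set E} -> nat, in_Delta s N.

Definition indecomposable (s : {set E} -> int) : Prop := ~ decomposable s.

Variable n : nat.
Variable X : 'I_n -> {set E}.
Variable t : 'I_n -> nat.

Definition w (e : E) : nat := #|[set i : 'I_n | e \in X i]|.

Definition rho (A : {set E}) : nat := (\sum_(i < n) minn #|A :&: X i| (t i))%N.

Definition lg_adj (i j : 'I_n) : bool := (i != j) && (X i :&: X j != set0).

Definition proper_coloring (k : nat) (c : 'I_n -> 'I_k) : Prop :=
  forall i j : 'I_n, lg_adj i j -> c i != c j.

Definition proper_coloringb (k : nat) (c : {ffun 'I_n -> 'I_k}) : bool :=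
  [forall i, forall j, lg_adj i j ==> (c i != c j)].

Definition colorable (k : nat) : bool := [exists c : {ffun 'I_n -> 'I_k}, proper_coloringb c].

Lemma colorable_n : exists k, colorable k.
Proof.
exists n; apply/existsP; exists [ffun i => i].
apply/forallP => i; apply/forallP => j; apply/implyP => /andP [Hij _].
by rewrite !ffunE.
Qed.

Definition chi : nat := ex_minn colorable_n.

Definition c1 (k : nat) (c : 'I_n -> 'I_k) : nat :=
  #|[set i : 'I_k | #|[set h : 'I_n | c h == i]| == 1%N]|.
Definition c2p (k : nat) (c : 'I_n -> 'I_k) : nat :=
  #|[set i : 'I_k | (2 <= #|[set h : 'I_n | c h == i]|)%N]|.

(* phi(c)_i = (direct sum over h with c h = i of U_{t_h, X_h}) (+) U_{0,Y},
   given by its rank function A |-> sum_{h : c h = i} min(|A cap X_h|, t_h). *)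
Definition phi_rank (k : nat) (c : 'I_n -> 'I_k) (i : 'I_k) (A : {set E}) : nat :=
  (\sum_(h < n | c h == i) minn #|A :&: X h| (t h))%N.

Definition cnt3 (h i j : 'I_n) (x : E) : nat :=
  ((x \in X h) + (x \in X i) + (x \in X j))%N.

Definition cond_a (A : {set E}) : Prop := (#|A| <= 3)%N.
Definition cond_b (A : {set E}) : Prop :=
  #|A| = 4%N /\
  exists h i j : 'I_n, [/\ h != i, h != j & i != j] /\
    [/\ t h = 1%N, t i = 1%N & t j = 1%N] /\
    exists2 a, a \in A & cnt3 h i j a = 1%N /\
      (forall b, b \in A -> b != a -> cnt3 h i j b = 2%N).
Definition cond_c (A : {set E}) : Prop :=
  exists i : 'I_n, A \subset X i /\ (#|A| <= t i + 1)%N.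
Definition cond_d (A : {set E}) : Prop :=
  exists i j : 'I_n, [/\ X i :&: X j != set0,
    A \subset (X i :\: X j) :|: (X j :\: X i),
    (#|A :&: X i| <= t i)%N & (#|A :&: X j| <= t j)%N].

End Defs.

From mathcomp Require Import all_boot all_order all_algebra.
From mathcomp Require Import zify.
Set Implicit Arguments. Unset Strict Implicit. Unset Printing Implicit Defensive.

(* Write sigma = r_1 + ... + r_k with matroid rank functions and let
   defect_j(A) be the nullity in r_j of the non-loops of A.  On every test set
   A both sum_j defect_j(A) and sum_q (|A :&: X_q| - t_q)^+ equal
   sum_(x in A) w(x) - rho(A), so they agree.  For a (t_i + 1)-subset of X_i
   the excess is 1: exactly one matroid sees it as dependent, and by (T) all
   such subsets of X_i choose the same matroid, the colour of X_i.  Test sets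
   of types (a)-(d) show that intersecting hyperedges get distinct colours; a
   singleton hyperedge {e} takes a colour in which e is not a loop and which no
   other hyperedge through e uses.  A colour class with two hyperedges has rank
   at least 2, whence sigma(E) >= c_1 + 2 c_2^+ >= chi(G_H); for sigma = rho,
   each r_j is bounded by the rank function of phi(c)_j and the sums agree. *)

Lemma exists_subset_card (T : finType) (A : {set T}) m :
  m <= #|A| -> exists2 C : {set T}, C \subset A & #|C| = m.
Proof.
elim: m => [|m IH] mA; first by exists set0; rewrite ?sub0set ?cards0.
have [C sCA cC] := IH (ltnW mA).
have /subsetPn [x xA xC] : ~~ (A \subset C).
  by apply/negP => /subset_leq_card; rewrite cC; lia.
by exists (x |: C); rewrite ?subUset ?sub1set ?xA ?sCA // cardsU1 xC cC.
Qed.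

Lemma setUD_subset (T : finType) (A B : {set T}) : B \subset A -> B :|: (A :\: B) = A.
Proof. by move=> sBA; rewrite setDE setUIr setUCr setIT (setUidPr sBA). Qed.

Lemma card_set_sum (T : finType) (P : pred T) : #|[set x | P x]| = \sum_(x : T) P x.
Proof. by rewrite -sum1dep_card big_mkcond /=; apply: eq_bigr => x _; case: (P x). Qed.

Lemma leq_term_sum (I : finType) (f : I -> nat) i : f i <= \sum_j f j.
Proof. by rewrite (bigD1 i) //= leq_addr. Qed.

Lemma leq_term2_sum (I : finType) (f : I -> nat) i i' :
  i != i' -> f i + f i' <= \sum_j f j.
Proof.
by move=> ii'; rewrite (bigD1 i) // (bigD1 i') 1?eq_sym //= addnA leq_addr.
Qed.

Lemma card_le_sum (I : finType) (f : I -> nat) (S : {set I}) :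
  {in S, forall i, 0 < f i} -> #|S| <= \sum_i f i.
Proof.
move=> f_gt0; rewrite (bigID (mem S)) /= -sum1_card; apply: leq_trans (leq_addr _ _).
exact: leq_sum.
Qed.

Lemma leq_add_card_sum (I : finType) (f : I -> nat) i (S : {set I}) :
  i \notin S -> {in S, forall j, 0 < f j} -> f i + #|S| <= \sum_j f j.
Proof.
move=> iS f_gt0; rewrite (bigID (mem (i |: S))) /= big_setU1 //= -addnA leq_add2l.
by apply: leq_trans (leq_addr _ _); rewrite -sum1_card; apply: leq_sum.
Qed.

Lemma exists_pos_other (I : finType) (f : I -> nat) i m :
  f i <= m -> m < \sum_j f j -> exists2 j, j != i & 0 < f j.
Proof.
move=> fi lt_sum; apply/exists_inP; apply: contraLR lt_sum; rewrite negb_exists_in -leqNgt.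
move=> /forall_inP f0; rewrite (bigD1 i) //= big1 ?addn0 // => j ji.
by apply/eqP; rewrite -leqn0 leqNgt f0.
Qed.

Lemma exists_third (T : finType) (B : {set T}) x y :
  x \in B -> y \in B -> B != [set x; y] -> exists2 z, z \in B & (z != x) && (z != y).
Proof.
move=> xB yB neB.
have [/exists_inP [z zB zxy] | ] := boolP [exists z in B, (z != x) && (z != y)]; first by exists z.
rewrite negb_exists_in => /forall_inP noz; case/negP: neB.
apply/eqP/setP => z; apply/idP/idP => [zB | /set2P [] ->] //.
by move: (noz z zB); rewrite negb_and !negbK !inE.
Qed.

Lemma eq_terms_leq_sum (I : finType) (f g : I -> nat) :
  (forall i, f i <= g i) -> \sum_i f i = \sum_i g i -> forall i, f i = g i.
Proof.
move=> le_fg eq_sum i; apply/eqP; rewrite eqn_leq le_fg leqNgt; apply/negP => lt_i.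
have : \sum_j f j < \sum_j g j.
  rewrite (bigD1 i) //= [X in _ < X](bigD1 i) //= -addSn.
  by apply: leq_add lt_i _; apply: leq_sum => j _.
by rewrite eq_sum ltnn.
Qed.

Lemma card_sum_fibers (I J : finType) (f : I -> J) (Q : {set I}) :
  #|Q| = \sum_j #|[set q in Q | f q == j]|.
Proof.
rewrite -sum1_card (partition_big f predT) //=; apply: eq_bigr => j _.
by rewrite -sum1_card; apply: eq_bigl => q; rewrite inE.
Qed.

Lemma sum_card_setI (T I : finType) (P : pred I) (Y : I -> {set T}) (A : {set T}) :
  \sum_(i | P i) #|A :&: Y i| = \sum_(x in A) #|[set i | P i && (x \in Y i)]|.
Proof.
transitivity (\sum_(i | P i) \sum_(x in A) (x \in Y i)).
  apply: eq_bigr => i _; rewrite -sum1_card big_mkcond [RHS]big_mkcond /=.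
  by apply: eq_bigr => x _; rewrite !inE; case: (x \in A); case: (x \in Y i).
rewrite exchange_big /=; apply: eq_bigr => x _.
by rewrite card_set_sum big_mkcond /=; apply: eq_bigr => i _; case: (P i).
Qed.

(** * Matroid rank functions *)

Section MatroidRank.
Variables (T : finType) (r : {set T} -> nat).
Hypothesis r_matroid : matroid_rank r.
Implicit Types (A B Y : {set T}) (x y z : T).

Lemma rank_le_card A : r A <= #|A|. Proof. by case: r_matroid. Qed.

Lemma rank_mono A B : A \subset B -> r A <= r B.
Proof. by case: r_matroid => _ + _; apply. Qed.

Lemma rank_submod A B : r (A :|: B) + r (A :&: B) <= r A + r B.
Proof. by case: r_matroid. Qed.

Lemma rank_set0 : r set0 = 0.
Proof. by apply/eqP; rewrite -leqn0 -(cards0 T) rank_le_card. Qed.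

Lemma rank_set1_le1 x : r [set x] <= 1.
Proof. by rewrite -(cards1 x) rank_le_card. Qed.

Lemma rank_subadd A B : r (A :|: B) <= r A + r B.
Proof. exact: leq_trans (leq_addr _ _) (rank_submod A B). Qed.

Lemma rank_bigcup_le (I : finType) (P : pred I) (F : I -> {set T}) :
  r (\bigcup_(i | P i) F i) <= \sum_(i | P i) r (F i).
Proof.
apply: (big_ind2 (fun S m => r S <= m)); first by rewrite rank_set0.
  by move=> S1 m1 S2 m2 h1 h2; apply: leq_trans (rank_subadd _ _) (leq_add h1 h2).
by [].
Qed.

Definition nonloops A := \sum_(x in A) r [set x].

Lemma nonloops_le_card A : nonloops A <= #|A|.
Proof. by rewrite -sum1_card; apply: leq_sum => x _; apply: rank_set1_le1. Qed.

Lemma nonloops_card A : {in A, forall x, r [set x] = 1} -> nonloops A = #|A|.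
Proof. by move=> nlA; rewrite -sum1_card; apply: eq_bigr. Qed.

Lemma nonloops_setID A B : B \subset A -> nonloops A = nonloops B + nonloops (A :\: B).
Proof. by move=> sBA; rewrite /nonloops (big_setID B) /= (setIidPr sBA). Qed.

Lemma rank_le_nonloops A : r A <= nonloops A.
Proof.
elim: {A}_.+1 {-2}A (ltnSn #|A|) => // m IH A cA.
have [->|[x xA]] := set_0Vmem A; first by rewrite rank_set0.
rewrite /nonloops (big_setD1 x xA) /= -{1}(setD1K xA).
apply: leq_trans (rank_subadd _ _) _; rewrite leq_add2l; apply: IH.
by rewrite (cardsD1 x A) xA in cA.
Qed.

Lemma rank_le_setD A B : B \subset A -> r A <= r B + nonloops (A :\: B).
Proof.
move=> sBA; rewrite -{1}(setUD_subset sBA).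
by apply: leq_trans (rank_subadd _ _) _; rewrite leq_add2l rank_le_nonloops.
Qed.

Definition defect A := nonloops A - r A.

Lemma defect_nonloops A : {in A, forall x, r [set x] = 1} -> defect A = #|A| - r A.
Proof. by move=> nlA; rewrite /defect nonloops_card. Qed.

Lemma defect_mono A B : B \subset A -> defect B <= defect A.
Proof.
move=> sBA; rewrite /defect (nonloops_setID sBA).
have := rank_le_setD sBA; have := rank_le_nonloops B; have := rank_mono sBA; lia.
Qed.

Lemma defect_setD1_loop A x : x \in A -> r [set x] = 0 -> defect A <= defect (A :\ x).
Proof.
move=> xA rx; rewrite /defect /nonloops (big_setD1 x xA) /= rx add0n.
have : r (A :\ x) <= r A by apply: rank_mono; apply: subsetDl.
lia.
Qed.

Definition parallel x y := [&& r [set x] == 1, r [set y] == 1 & r [set x; y] <= 1].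

Lemma parallel_sym x y : parallel x y = parallel y x.
Proof. by rewrite /parallel setUC andbCA. Qed.

Lemma parallel_trans y x z : parallel x y -> parallel y z -> parallel x z.
Proof.
move=> /and3P [/eqP rx /eqP ry rxy] /and3P [_ /eqP rz ryz].
have := rank_submod [set x; y] [set y; z].
have : r [set y] <= r ([set x; y] :&: [set y; z]).
  by apply: rank_mono; rewrite subsetI !sub1set !inE !eqxx orbT.
have : r [set x; z] <= r ([set x; y] :|: [set y; z]).
  by apply: rank_mono; apply/subsetP => v; rewrite !inE => /orP [] ->; rewrite ?orbT.
by rewrite /parallel rx rz !eqxx /=; lia.
Qed.

Lemma rank_setU1_parallel B x y : x \in B -> parallel x y -> r (y |: B) <= r B.
Proof.
move=> xB /and3P [/eqP rx _ rxy].
have := rank_submod B [set x; y].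
have : r [set x] <= r (B :&: [set x; y]).
  by apply: rank_mono; rewrite subsetI !sub1set xB !inE eqxx.
have -> : B :|: [set x; y] = y |: B.
  by apply/setP => v; rewrite !inE; case: (v =P x) => [->|]; rewrite ?xB ?orbT // orbC.
lia.
Qed.

Lemma rank_setU_spanned B Y : {in Y, forall y, r (y |: B) <= r B} -> r (B :|: Y) <= r B.
Proof.
elim: {Y}_.+1 {-2}Y (ltnSn #|Y|) => // m IH Y cY spanY.
have [->|[y yY]] := set_0Vmem Y; first by rewrite setU0.
have IHy : r (B :|: (Y :\ y)) <= r B.
  apply: IH => [|v /setD1P [_ vY]]; last exact: spanY.
  by rewrite (cardsD1 y Y) yY in cY.
have -> : B :|: Y = (B :|: (Y :\ y)) :|: (y |: B).
  apply/setP => v; rewrite !inE; case: (v =P y) => [->|_]; rewrite ?yY ?orbT //=.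
  by case: (v \in B); case: (v \in Y).
have := rank_submod (B :|: (Y :\ y)) (y |: B).
have : r B <= r ((B :|: (Y :\ y)) :&: (y |: B)).
  by apply: rank_mono; rewrite subsetI subsetUl subsetUr.
have := spanY y yY; lia.
Qed.

(* Each pair [(s q, u q)] of parallel elements contributes its own unit of
   defect, because [A] is spanned by [A] minus the fresh partners [u q]. *)
Lemma card_le_defect (I : finType) (Q : {set I}) (s u : I -> T) A :
  {in Q, forall q, [/\ s q \in A, u q \in A, parallel (s q) (u q) & s q \notin u @: Q]} ->
  {in Q &, injective u} -> #|Q| <= defect A.
Proof.
move=> pairsQ u_inj; set U := u @: Q.
have cU : #|U| = #|Q| by rewrite card_in_imset.
have sUA : U \subset A by apply/subsetP => _ /imsetP [q qQ ->]; case: (pairsQ q qQ).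
have rA : r A <= r (A :\: U).
  rewrite -{1}(setUD_subset sUA) setUC; apply: rank_setU_spanned => _ /imsetP [q qQ ->].
  case: (pairsQ q qQ) => sA _ par_su sU.
  by apply: (rank_setU1_parallel _ par_su); rewrite inE sU.
have nU : nonloops U = #|U|.
  apply: nonloops_card => _ /imsetP [q qQ ->].
  by case: (pairsQ q qQ) => _ _ /and3P [_ /eqP].
rewrite /defect (nonloops_setID sUA) nU cU.
have := rank_le_nonloops (A :\: U); lia.
Qed.

End MatroidRank.

(** * Hypergraphs and excess *)

Section Hypergraph.
Variables (E : finType) (n : nat) (X : 'I_n -> {set E}) (t : 'I_n -> nat).
Hypothesis X_neq0 : forall i, X i != set0.
Hypothesis X_inj : injective X.
Hypothesis meet_le1 : forall i j, i != j -> #|X i :&: X j| <= 1.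
Hypothesis t_spec : forall i, t i = 1 \/
  ((exists2 e, e \in X i & w X e <= t i) /\ t i < #|X i|).
Hypothesis no_triangle : ~ exists a b c : E, [/\ a != b, a != c & b != c] /\
  exists i j l, [/\ X i = [set a; b], X j = [set a; c] & X l = [set b; c]].
Implicit Types (A B C S T U : {set E}) (i l q : 'I_n).

Lemma w_sum e : w X e = \sum_q (e \in X q).
Proof. exact: card_set_sum. Qed.

Lemma t_gt0 q : 0 < t q.
Proof.
case: (t_spec q) => [->//|[[e eX le_w] _]]; apply: leq_trans le_w.
by rewrite card_gt0; apply/set0Pn; exists q; rewrite inE.
Qed.

Lemma meet_eq i q x y :
  i != q -> x \in X i -> y \in X i -> x \in X q -> y \in X q -> x = y.
Proof.
move=> iq xi yi xq yq; apply/eqP; apply: contraT => xy.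
have /subset_leq_card : [set x; y] \subset X i :&: X q.
  by apply/subsetP => z; rewrite !inE => /orP [] /eqP ->; rewrite ?xi ?xq ?yi ?yq.
by rewrite cards2 xy; have := meet_le1 iq; lia.
Qed.

Lemma pair_edge_uniq q q' x y :
  x != y -> x \in X q -> y \in X q -> x \in X q' -> y \in X q' -> q = q'.
Proof.
move=> xy xq yq xq' yq'; apply/eqP; apply: contraT => qq'.
by rewrite (meet_eq qq' xq yq xq' yq') eqxx in xy.
Qed.

Lemma card_meet_le1 i q B : q != i -> B \subset X i -> #|B :&: X q| <= 1.
Proof.
move=> qi sBi; apply: leq_trans (meet_le1 qi); apply: subset_leq_card.
by rewrite setIC setIS.
Qed.

Lemma rho_set1 e : rho X t [set e] = w X e.
Proof.
rewrite /rho w_sum; apply: eq_bigr => q _; have := t_gt0 q.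
case: (boolP (e \in X q)) => eq.
  by rewrite (setIidPl _) ?sub1set // cards1; lia.
by rewrite (_ : _ :&: _ = set0) ?cards0; [lia | apply/setP => x; rewrite !inE;
  case: (x =P e) => // ->; rewrite (negPf eq)].
Qed.

Definition excess q A := #|A :&: X q| - t q.
Definition excess_sum A := \sum_q excess q A.

Lemma sum_card_meet A : \sum_q #|A :&: X q| = rho X t A + excess_sum A.
Proof. by rewrite /rho /excess_sum -big_split /=; apply: eq_bigr => q _; rewrite /excess; lia. Qed.

Lemma sum_w A : \sum_(x in A) w X x = \sum_q #|A :&: X q|.
Proof. by rewrite (sum_card_setI predT). Qed.

Lemma excess0 q A : #|A :&: X q| <= t q -> excess q A = 0.
Proof. by rewrite /excess; lia. Qed.

Lemma excess_le q A (P : {set E}) d :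
  A :&: X q \subset P -> #|P| <= t q + d -> excess q A <= d.
Proof. by move=> /subset_leq_card; rewrite /excess; lia. Qed.

Lemma excess_ge1 q A x y : x != y -> x \in A -> y \in A -> x \in X q -> y \in X q ->
  t q = 1 -> 1 <= excess q A.
Proof.
move=> xy xA yA xq yq tq; rewrite /excess tq.
have /subset_leq_card : [set x; y] \subset A :&: X q.
  by apply/subsetP => z; rewrite !inE => /orP [] /eqP ->; rewrite ?xA ?xq ?yA ?yq.
by rewrite cards2 xy; lia.
Qed.

Lemma excess_sum_edge i C : C \subset X i -> excess_sum C = #|C| - t i.
Proof.
move=> sCi; rewrite /excess_sum (bigD1 i) //= big1 ?addn0; first by rewrite /excess (setIidPl sCi).
by move=> q qi; apply: excess0; apply: leq_trans (card_meet_le1 qi sCi) (t_gt0 q).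
Qed.

Lemma excess_sum_le_card A : (forall q, excess q A <= 1) ->
  excess_sum A <= #|[set q | 0 < excess q A]|.
Proof.
move=> ex_le1; rewrite card_set_sum; apply: leq_sum => q _.
by have := ex_le1 q; case: (excess q A) => [|[]].
Qed.

Lemma excess_pair_gt0 q x y :
  0 < excess q [set x; y] -> [/\ x != y, x \in X q & y \in X q].
Proof.
rewrite /excess; have := t_gt0 q; have /subset_leq_card := subsetIl [set x; y] (X q).
case: (eqVneq x y) => [<-|xy]; first by rewrite setUid cards1 => ? ? ?; lia.
rewrite cards2 xy /= => le2 tq pos.
have /eqP : [set x; y] :&: X q == [set x; y] by rewrite eqEcard subsetIl cards2 xy /=; lia.
by move/setIidPl; rewrite subUset !sub1set => /andP [].
Qed.

Lemma excess_sum_pair_le1 x y : excess_sum [set x; y] <= 1.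
Proof.
have ex_le1 q : excess q [set x; y] <= 1.
  by apply: excess_le (subsetIl _ _) _; rewrite cards2; have := t_gt0 q; case: (x != y); lia.
apply: leq_trans (excess_sum_le_card ex_le1) _; apply/card_le1_eqP => q q'.
rewrite !inE => /excess_pair_gt0 [xy xq yq] /excess_pair_gt0 [_ xq' yq'].
exact: pair_edge_uniq xy xq' yq' xq yq.
Qed.

Lemma excess_setU_gt0 q S T : #|S :&: X q| <= 1 -> #|T :&: X q| <= 1 ->
  0 < excess q (S :|: T) ->
  [/\ t q = 1, excess q (S :|: T) <= 1, S :&: X q != set0 & T :&: X q != set0].
Proof.
move=> Sq Tq; rewrite /excess setIUl -!card_gt0 => exq; have := t_gt0 q.
have : #|(S :&: X q) :|: (T :&: X q)| <= #|S :&: X q| + #|T :&: X q| := leq_card_setU _ _.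
by split; lia.
Qed.

Definition has_circuit i := t i < #|X i|.

Lemma has_circuit_pair q x y :
  x != y -> x \in X q -> y \in X q -> t q = 1 -> has_circuit q.
Proof.
move=> xy xq yq tq; rewrite /has_circuit tq.
have /subset_leq_card : [set x; y] \subset X q.
  by apply/subsetP => z; rewrite !inE => /orP [] /eqP ->.
by rewrite cards2 xy.
Qed.

Lemma no_circuit_set1 i e : ~~ has_circuit i -> e \in X i -> X i = [set e].
Proof.
move=> noCi ei; have ti : t i = 1.
  by case: (t_spec i) => // [[_ lt]]; rewrite /has_circuit lt in noCi.
apply/eqP; rewrite eq_sym eqEcard sub1set ei cards1.
by move: noCi; rewrite /has_circuit ti -leqNgt.
Qed.

Definition agree_set A := cond_a A \/ cond_b X t A \/ cond_c X t A \/ cond_d X t A.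

Lemma agree_set_small A : #|A| <= 3 -> agree_set A.
Proof. by left. Qed.

Lemma agree_set_edge i C : C \subset X i -> #|C| <= (t i).+1 -> agree_set C.
Proof. by move=> sCi cC; right; right; left; exists i; rewrite addn1. Qed.

Lemma sum_phi_rank k (c : 'I_n -> 'I_k) A : \sum_(j < k) phi_rank X t c j A = rho X t A.
Proof. by rewrite /rho (partition_big c predT). Qed.

Lemma phi_rank_matroid k (c : 'I_n -> 'I_k) j : proper_coloring X c ->
  matroid_rank (phi_rank X t c j).
Proof.
move=> c_proper; split=> [A | A B sAB | A B]; rewrite /phi_rank.
- apply: (@leq_trans (\sum_(h < n | c h == j) #|A :&: X h|)).
    by apply: leq_sum => h _; apply: geq_minl.
  rewrite sum_card_setI -sum1_card; apply: leq_sum => x _.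
  apply/card_le1_eqP => h h' /[!inE] /andP [/eqP hj xh] /andP [/eqP h'j xh'].
  apply/eqP; apply: contraT => h'h.
  have adj : lg_adj X h' h by rewrite /lg_adj h'h; apply/set0Pn; exists x; rewrite inE xh' xh.
  by have := c_proper _ _ adj; rewrite h'j hj eqxx.
- apply: leq_sum => h _; rewrite leq_min geq_minr andbT.
  by apply: leq_trans (geq_minl _ _) _; apply/subset_leq_card/setSI.
rewrite -!big_split /=; apply: leq_sum => h _.
have := cardsUI (A :&: X h) (B :&: X h); rewrite -setIUl -setIIl.
have := subset_leq_card (setSI (X h) (subsetIl A B)).
have := subset_leq_card (setSI (X h) (subsetIr A B)).
lia.
Qed.

(** * The colour of a hyperedge *)

Section Decomposition.
Variables (k : nat) (N : 'I_k -> {set E} -> nat).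
Hypothesis k_gt0 : 0 < k.
Hypothesis N_matroid : forall j, matroid_rank (N j).
Hypothesis sumN_agree : forall A, agree_set A -> \sum_(j < k) N j A = rho X t A.
Implicit Types (j p : 'I_k).

Lemma sumN_set1 e : \sum_j N j [set e] = w X e.
Proof. by rewrite sumN_agree ?rho_set1 //; apply: agree_set_small; rewrite cards1. Qed.

Lemma sum_defect_agree A : agree_set A -> \sum_j defect (N j) A = excess_sum A.
Proof.
move=> agA.
have : \sum_j nonloops (N j) A = \sum_j defect (N j) A + \sum_j N j A.
  rewrite -big_split /=; apply: eq_bigr => j _; rewrite /defect.
  by have := rank_le_nonloops (N_matroid j) A; lia.
rewrite /nonloops exchange_big /= (eq_bigr _ (fun x _ => sumN_set1 x)).
by rewrite sum_w sum_card_meet sumN_agree //; lia.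
Qed.

Definition nonloop_colors e := [set j | N j [set e] == 1].

Lemma card_nonloop_colors e : #|nonloop_colors e| = w X e.
Proof.
rewrite -sumN_set1 card_set_sum; apply: eq_bigr => j _.
by have := rank_set1_le1 (N_matroid j) e; case: (N j [set e]) => [|[|]].
Qed.

Lemma defect_small i C j : C \subset X i -> #|C| <= t i -> defect (N j) C = 0.
Proof.
move=> sCi cC; have := sum_defect_agree (agree_set_edge sCi (leqW cC)).
rewrite (excess_sum_edge sCi) => sum0.
by have := leq_term_sum (fun j => defect (N j) C) j; lia.
Qed.

Lemma rank_small i C j : C \subset X i -> #|C| <= t i ->
  {in C, forall x, N j [set x] = 1} -> N j C = #|C|.
Proof.
move=> sCi cC nlC; have := defect_small j sCi cC; rewrite defect_nonloops //.
by have := rank_le_card (N_matroid j) C; lia.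
Qed.

Lemma sum_defect_circuit i C : C \subset X i -> #|C| = (t i).+1 ->
  \sum_j defect (N j) C = 1.
Proof.
move=> sCi cC; rewrite sum_defect_agree ?(excess_sum_edge sCi) ?cC ?subSnn //.
by apply: (agree_set_edge sCi); rewrite cC.
Qed.

Lemma circuit_defect_uniq i C j j' : C \subset X i -> #|C| = (t i).+1 ->
  0 < defect (N j) C -> 0 < defect (N j') C -> j = j'.
Proof.
move=> sCi cC dj dj'; apply/eqP; apply: contraT => jj'.
have := leq_term2_sum (fun j => defect (N j) C) jj'.
by rewrite (sum_defect_circuit sCi cC); lia.
Qed.

Lemma circuit_nonloop i C j x : C \subset X i -> #|C| = (t i).+1 ->
  0 < defect (N j) C -> x \in C -> N j [set x] = 1.
Proof.
move=> sCi cC dC xC; have := rank_set1_le1 (N_matroid j) x.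
case rx: (N j [set x]) => [|[|//]] _ //.
have := defect_setD1_loop (N_matroid j) xC rx.
have cCx : #|C :\ x| <= t i by move: cC; rewrite (cardsD1 x C) xC; lia.
by rewrite (defect_small _ (subset_trans (subD1set _ _) sCi) cCx); lia.
Qed.

Lemma circuit_rank i C j : C \subset X i -> #|C| = (t i).+1 ->
  0 < defect (N j) C -> N j C = t i.
Proof.
move=> sCi cC dC.
have nlC : {in C, forall x, N j [set x] = 1} by move=> x; apply: circuit_nonloop sCi cC dC.
have := leq_term_sum (fun j => defect (N j) C) j.
by rewrite (sum_defect_circuit sCi cC) /=; move: dC; rewrite defect_nonloops // cC; lia.
Qed.

Definition circuit_color C := odflt (Ordinal k_gt0) [pick j | 0 < defect (N j) C].

Lemma circuit_colorP i C : C \subset X i -> #|C| = (t i).+1 ->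
  0 < defect (N (circuit_color C)) C.
Proof.
move=> sCi cC; rewrite /circuit_color; case: pickP => [j //|none].
have := sum_defect_circuit sCi cC; rewrite big1 // => j _.
by have := none j; case: (defect _ C).
Qed.

Lemma circuit_color_uniq i C j : C \subset X i -> #|C| = (t i).+1 ->
  0 < defect (N j) C -> circuit_color C = j.
Proof. by move=> sCi cC; apply: circuit_defect_uniq sCi cC (circuit_colorP sCi cC). Qed.

Section CircuitsOfASet.
Variables (i : 'I_n) (U : {set E}).
Hypotheses (sUi : U \subset X i) (cU : #|U| = (t i).+2).

Let sUi_D1 y : U :\ y \subset X i. Proof. exact: subset_trans (subD1set _ _) sUi. Qed.
Let cU_D1 y : y \in U -> #|U :\ y| = (t i).+1.
Proof. by move=> yU; move: cU; rewrite (cardsD1 y U) yU; lia. Qed.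

(* Two circuits of [U] with a common defective colour [p] have rank [t i]
   and meet in an independent set of rank [t i], so [U] has rank [t i]. *)
Lemma circuit_defect_spread y y' p : y \in U -> y' \in U -> y != y' ->
  0 < defect (N p) (U :\ y) -> 0 < defect (N p) (U :\ y') ->
  forall C, C \subset U -> #|C| = (t i).+1 -> 0 < defect (N p) C.
Proof.
move=> yU y'U yy' dy dy' C sCU cC.
have nlU : {in U, forall x, N p [set x] = 1}.
  move=> x xU; case: (eqVneq x y) => [xy|xy].
    by apply: (circuit_nonloop (sUi_D1 y') (cU_D1 y'U) dy'); rewrite !inE xU xy yy'.
  by apply: (circuit_nonloop (sUi_D1 y) (cU_D1 yU) dy); rewrite !inE xU xy.
have UE : (U :\ y) :|: (U :\ y') = U.
  apply/setP => x; rewrite !inE; case: (x \in U); rewrite ?andbF //=.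
  by case: (eqVneq x y) => // ->; rewrite yy'.
have cI : #|(U :\ y) :&: (U :\ y')| = t i.
  by have := cardsUI (U :\ y) (U :\ y'); rewrite UE cU !cU_D1 //; lia.
have rI : N p ((U :\ y) :&: (U :\ y')) = t i.
  rewrite -[RHS]cI; apply: rank_small (subset_trans (subsetIl _ _) (sUi_D1 y)) _ _.
    by rewrite cI.
  by move=> x /setIP [/setD1P [_ xU] _]; apply: nlU.
have := rank_submod (N_matroid p) (U :\ y) (U :\ y').
rewrite UE rI !(circuit_rank (sUi_D1 _) (cU_D1 _)) // => rU.
have := rank_mono (N_matroid p) sCU.
by rewrite defect_nonloops ?cC => [|x xC]; [lia | apply/nlU/(subsetP sCU)].
Qed.

(* Either three circuits of a 3-set carry three units of defect while the
   excess is two, or the [t i + 1] circuits through [e0] use distinct colours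
   in which [e0] is not a loop. *)
Lemma circuit_colors_collide :
  (t i = 1 \/ exists2 e0, e0 \in U & w X e0 <= t i) ->
  exists y y', [/\ y \in U, y' \in U, y != y' &
    circuit_color (U :\ y) = circuit_color (U :\ y')].
Proof.
move=> small_w; pose g y := circuit_color (U :\ y).
have [[y y'] /and4P [yU y'U yy' /eqP gyy'] | noColl] :=
  pickP [pred yy : E * E | [&& yy.1 \in U, yy.2 \in U, yy.1 != yy.2 & g yy.1 == g yy.2]].
  by exists y, y'.
exfalso; have g_inj : {in U &, injective g}.
  move=> y y' yU y'U gyy'; apply/eqP; apply: contraT => yy'.
  by have := noColl (y, y'); rewrite /= yU y'U yy' gyy' eqxx.
have dg y : y \in U -> 0 < defect (N (g y)) (U :\ y).
  by move=> yU; apply: circuit_colorP (sUi_D1 y) (cU_D1 yU).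
case: small_w => [ti | [e0 e0U le_w]].
  have cU3 : #|U| = 3 by rewrite cU ti.
  have : #|g @: U| <= \sum_j defect (N j) U.
    apply: card_le_sum => _ /imsetP [y yU ->].
    exact: leq_trans (dg y yU) (defect_mono (N_matroid _) (subD1set U y)).
  rewrite card_in_imset // sum_defect_agree ?(excess_sum_edge sUi) ?cU3 ?ti //.
  by apply: agree_set_small; rewrite cU3.
have : g @: (U :\ e0) \subset nonloop_colors e0.
  apply/subsetP => _ /imsetP [y /setD1P [ye0 yU] ->]; rewrite inE; apply/eqP.
  by apply: (circuit_nonloop (sUi_D1 y) (cU_D1 yU) (dg y yU)); rewrite !inE eq_sym ye0.
move/subset_leq_card; rewrite card_nonloop_colors card_in_imset ?cU_D1 //; first by lia.
by move=> y y' /setD1P [_ yU] /setD1P [_ y'U]; apply: g_inj.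
Qed.

Lemma circuit_color_const_on :
  (t i = 1 \/ exists2 e0, e0 \in U & w X e0 <= t i) ->
  forall C C', C \subset U -> C' \subset U -> #|C| = (t i).+1 -> #|C'| = (t i).+1 ->
  circuit_color C = circuit_color C'.
Proof.
case/circuit_colors_collide => y [y' [yU y'U yy' gyy']] C C' sCU sC'U cC cC'.
have dy := circuit_colorP (sUi_D1 y) (cU_D1 yU).
have dy' := circuit_colorP (sUi_D1 y') (cU_D1 y'U); rewrite -gyy' in dy'.
have spread := circuit_defect_spread yU y'U yy' dy dy'.
rewrite (circuit_color_uniq (subset_trans sCU sUi) cC (spread C sCU cC)).
by rewrite (circuit_color_uniq (subset_trans sC'U sUi) cC' (spread C' sC'U cC')).
Qed.

End CircuitsOfASet.

Lemma circuit_color_adjacent i C C' : C \subset X i -> C' \subset X i ->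
  #|C| = (t i).+1 -> #|C'| = (t i).+1 -> #|C :|: C'| = (t i).+2 ->
  circuit_color C = circuit_color C'.
Proof.
move=> sCi sC'i cC cC' cU.
have sUi : C :|: C' \subset X i by rewrite subUset sCi sC'i.
case: (t_spec i) => [ti | [[e0 e0i le_w] _]].
  exact: circuit_color_const_on sUi cU (or_introl ti) _ _ (subsetUl _ _) (subsetUr _ _) cC cC'.
have [e0U | e0U] := boolP (e0 \in C :|: C').
  apply: circuit_color_const_on sUi cU _ _ _ (subsetUl _ _) (subsetUr _ _) cC cC'.
  by right; exists e0.
move: e0U; rewrite inE negb_or => /andP [e0C e0C'].
have cI : #|C :&: C'| = t i by have := cardsUI C C'; rewrite cU cC cC'; lia.
have via_e0 (D : {set E}) : D \subset X i -> #|D| = (t i).+1 -> e0 \notin D -> C :&: C' \subset D ->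
    circuit_color D = circuit_color (e0 |: (C :&: C')).
  move=> sDi cD e0D sID; apply: (@circuit_color_const_on i (e0 |: D)).
  - by rewrite subUset sub1set e0i sDi.
  - by rewrite cardsU1 e0D cD.
  - by right; exists e0; rewrite ?setU11.
  - exact: subsetUr.
  - exact: setUS.
  - exact: cD.
  - by rewrite cardsU1 inE (negPf e0C) cI.
by rewrite (via_e0 C) ?(via_e0 C') ?subsetIl ?subsetIr.
Qed.

Lemma circuit_color_const i C C' : C \subset X i -> C' \subset X i ->
  #|C| = (t i).+1 -> #|C'| = (t i).+1 -> circuit_color C = circuit_color C'.
Proof.
move=> + sC'i + cC'.
elim: {C}_.+1 {-2}C (ltnSn #|C :\: C'|) => // m IH C cD sCi cC.
have [CC'0 | [a /setDP [aC aC']]] := set_0Vmem (C :\: C').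
  have sCC' : C \subset C' by rewrite -setD_eq0 CC'0.
  by have /eqP -> : C == C' by rewrite eqEcard sCC' cC cC' leqnn.
have cDD : #|C' :\: C| = #|C :\: C'|.
  by have := cardsID C C'; have := cardsID C' C; rewrite setIC cC cC'; lia.
have /set0Pn [b /setDP [bC' bC]] : C' :\: C != set0.
  by rewrite -card_gt0 cDD card_gt0; apply/set0Pn; exists a; rewrite inE aC aC'.
set C1 := b |: (C :\ a).
have bCa : b \notin C :\ a by rewrite inE negb_and bC orbT.
have cC1 : #|C1| = (t i).+1 by rewrite cardsU1 bCa; move: cC; rewrite (cardsD1 a C) aC; lia.
have sC1i : C1 \subset X i.
  by rewrite subUset sub1set (subsetP sC'i b bC') (subset_trans (subD1set _ _) sCi).
rewrite (@circuit_color_adjacent i C C1) //; last first.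
  have -> : C :|: C1 = b |: C by rewrite setUCA (setUidPl (subD1set C a)).
  by rewrite cardsU1 bC cC.
apply: IH => //; have -> : C1 :\: C' = (C :\: C') :\ a.
  by apply/setP => x; rewrite !inE; case: (x =P b) => [->|_]; rewrite ?bC' ?andbF //= andbCA andbA.
by move: cD; rewrite [#|C :\: C'|](cardsD1 a) inE aC aC'; lia.
Qed.

Definition edge_color i :=
  if [pick C : {set E} | (C \subset X i) && (#|C| == (t i).+1)] is Some C then circuit_color C
  else Ordinal k_gt0.

Lemma edge_color_circuit i C : C \subset X i -> #|C| = (t i).+1 ->
  edge_color i = circuit_color C.
Proof.
move=> sCi cC; rewrite /edge_color; case: pickP => [C' /andP [sC'i /eqP cC'] | /(_ C)].
  exact: circuit_color_const sC'i sCi cC' cC.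
by rewrite sCi cC eqxx.
Qed.

Lemma edge_colorP i C : C \subset X i -> #|C| = (t i).+1 ->
  0 < defect (N (edge_color i)) C.
Proof. by move=> sCi cC; rewrite (edge_color_circuit sCi cC); apply: circuit_colorP sCi cC. Qed.

Lemma edge_color_uniq i C j : C \subset X i -> #|C| = (t i).+1 ->
  0 < defect (N j) C -> edge_color i = j.
Proof. by move=> sCi cC; rewrite (edge_color_circuit sCi cC); apply: circuit_color_uniq sCi cC. Qed.

Lemma edge_color_rank i C : C \subset X i -> #|C| = (t i).+1 -> N (edge_color i) C = t i.
Proof. by move=> sCi cC; apply: circuit_rank sCi cC (edge_colorP sCi cC). Qed.

Lemma edge_color_nonloop i x : has_circuit i -> x \in X i -> N (edge_color i) [set x] = 1.
Proof.
move=> hCi xi; have [C sC cC] : exists2 C : {set E}, C \subset X i :\ x & #|C| = t i.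
  by apply: exists_subset_card; move: hCi; rewrite /has_circuit (cardsD1 x) xi; lia.
have xC : x \notin C by apply/negP => /(subsetP sC); rewrite !inE eqxx.
have sxCi : x |: C \subset X i.
  by rewrite subUset sub1set xi (subset_trans sC (subD1set _ _)).
have cxC : #|x |: C| = (t i).+1 by rewrite cardsU1 xC cC.
by apply: circuit_nonloop sxCi cxC (edge_colorP sxCi cxC) _; rewrite setU11.
Qed.

Lemma edge_color_parallel i x y : t i = 1 -> x \in X i -> y \in X i -> x != y ->
  parallel (N (edge_color i)) x y.
Proof.
move=> ti xi yi xy; have hCi := has_circuit_pair xy xi yi ti.
have sxyi : [set x; y] \subset X i by rewrite subUset !sub1set xi yi.
have cxy : #|[set x; y]| = (t i).+1 by rewrite cards2 xy ti.
have := edge_colorP sxyi cxy; have := nonloops_le_card (N_matroid (edge_color i)) [set x; y].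
by rewrite /parallel /defect !edge_color_nonloop // cards2 xy /=; lia.
Qed.

Lemma parallel_edge j x y : x != y -> parallel (N j) x y ->
  exists q, [/\ x \in X q, y \in X q, t q = 1 & edge_color q = j].
Proof.
move=> xy par_xy; have /and3P [/eqP rx /eqP ry rxy] := par_xy.
have dxy : 0 < defect (N j) [set x; y].
  by rewrite defect_nonloops => [|z /set2P [] ->] //; rewrite cards2 xy; lia.
have : 0 < excess_sum [set x; y].
  rewrite -sum_defect_agree; last by apply: agree_set_small; rewrite cards2 xy.
  exact: leq_trans dxy (leq_term_sum (fun j => defect (N j) _) j).
rewrite lt0n sum_nat_eq0 negb_forall => /existsP [q]; rewrite -lt0n => exq.
have [_ xq yq] := excess_pair_gt0 exq.
have tq : t q = 1.
  move: exq; rewrite /excess (setIidPl _) ?subUset ?sub1set ?xq ?yq // cards2 xy.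
  by have := t_gt0 q; lia.
exists q; split => //; apply: (@edge_color_uniq q [set x; y]) dxy.
  by rewrite subUset !sub1set xq yq.
by rewrite cards2 xy tq.
Qed.

Lemma no_parallel_in_edge i j x y : x \in X i -> y \in X i -> x != y -> 2 <= t i ->
  ~~ parallel (N j) x y.
Proof.
move=> xi yi xy t2; apply/negP => /(parallel_edge xy) [q [xq yq tq _]].
by move: t2; rewrite -(pair_edge_uniq xy xq yq xi yi) tq.
Qed.

(** * Intersecting hyperedges get distinct colours *)

Section ExcessPairs.
Variables (A S T : {set E}) (i : 'I_n) (s u : 'I_n -> E).
Hypotheses (sSA : S \subset A) (sTA : T \subset A) (dST : [disjoint S & T]).
Hypotheses (sSi : S \subset X i) (t2 : 2 <= t i).
Hypothesis pairs_excess : forall q, 0 < excess q A ->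
  [/\ t q = 1, s q \in X q :&: S & u q \in X q :&: T].

Let su q q' : 0 < excess q A -> 0 < excess q' A -> s q != u q'.
Proof.
move=> /pairs_excess [_ /setIP [_ sqS] _] /pairs_excess [_ _ /setIP [_ uq'T]].
by apply: contraTneq uq'T => <-; rewrite (disjointFr dST sqS).
Qed.

Let parallel_pair q : 0 < excess q A -> parallel (N (edge_color q)) (s q) (u q).
Proof.
move=> exq; have [tq /setIP [sqq _] /setIP [uqq _]] := pairs_excess exq.
exact: edge_color_parallel tq sqq uqq (su exq exq).
Qed.

(* Two hyperedges of colour [r] with a common partner [u q] would make their
   points [s q] of [X i] parallel in [N r]. *)
Lemma excess_class_le_defect r :
  #|[set q | 0 < excess q A & edge_color q == r]| <= defect (N r) A.
Proof.
apply: (card_le_defect (N_matroid r) (s := s) (u := u)).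
  move=> q /setIdP [exq /eqP <-]; have [_ /setIP [_ sqS] /setIP [_ uqT]] := pairs_excess exq.
  split; [exact: subsetP sSA _ sqS | exact: subsetP sTA _ uqT | exact: parallel_pair |].
  by apply/imsetP => -[q' /setIdP [exq' _] squq']; move: (su exq exq'); rewrite squq' eqxx.
move=> q q' /setIdP [exq /eqP cq] /setIdP [exq' /eqP cq'] uqq'.
apply/eqP; apply: contraT => qq'.
have [_ /setIP [sqq sqS] /setIP [uqq _]] := pairs_excess exq.
have [_ /setIP [sq'q' sq'S] /setIP [uq'q' _]] := pairs_excess exq'.
have [ss' | ss'] := eqVneq (s q) (s q').
  rewrite ss' uqq' in sqq uqq.
  by rewrite (pair_edge_uniq (su exq' exq') sqq uqq sq'q' uq'q') eqxx in qq'.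
have : parallel (N r) (s q) (s q').
  apply: (@parallel_trans _ _ (N_matroid r) (u q)); first by rewrite -cq parallel_pair.
  by rewrite parallel_sym uqq' -cq' parallel_pair.
by rewrite (negPf (no_parallel_in_edge _ (subsetP sSi _ sqS) (subsetP sSi _ sq'S) ss' t2)).
Qed.

End ExcessPairs.

(* The excess of [A] is carried by hyperedges of colours other than [p], each
   contributing a unit of defect, and the colour [p] contributes one more. *)
Lemma excess_pairs_contra A p i (S T : {set E}) :
  agree_set A -> S \subset A -> T \subset A -> [disjoint S & T] ->
  S \subset X i -> 2 <= t i -> 0 < defect (N p) A ->
  (forall q, 0 < excess q A -> [/\ excess q A <= 1, t q = 1, edge_color q != p,
     X q :&: S != set0 & X q :&: T != set0]) -> False.
Proof.
move=> agA sSA sTA dST sSi t2 dpA exA.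
have /set0Pn [x0 _] : A != set0.
  by apply: contraTneq dpA => ->; rewrite /defect /nonloops big_set0.
pose s q := odflt x0 [pick x in X q :&: S].
pose u q := odflt x0 [pick x in X q :&: T].
have pairs_excess q : 0 < excess q A ->
    [/\ t q = 1, s q \in X q :&: S & u q \in X q :&: T].
  move=> /exA [_ tq _ /set0Pn [x xqS] /set0Pn [y yqT]]; split=> //.
    by rewrite /s; case: pickP => [//|/(_ x)]; rewrite xqS.
  by rewrite /u; case: pickP => [//|/(_ y)]; rewrite yqT.
set Q := [set q | 0 < excess q A].
have exQ : excess_sum A <= #|Q|.
  by apply: excess_sum_le_card => q; case: (posnP (excess q A)) => [->|/exA []].
have Qp : [set q in Q | edge_color q == p] = set0.
  apply/setP => q; rewrite !inE; apply/negbTE; apply/andP => -[exq /eqP cq].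
  by have [_ _] := exA q exq; rewrite cq eqxx.
have QleS : #|Q| <= \sum_(r | r != p) defect (N r) A.
  rewrite (card_sum_fibers edge_color) (bigD1 p) //= Qp cards0 add0n.
  apply: leq_sum => r _.
  apply: leq_trans (excess_class_le_defect sSA sTA dST sSi t2 pairs_excess r).
  by apply/subset_leq_card/subsetP => q; rewrite !inE.
have := sum_defect_agree agA; rewrite (bigD1 p) //= => sumA.
have : defect (N p) A + #|Q| <= excess_sum A by rewrite -sumA leq_add2l.
lia.
Qed.

Section AdjacentEdges.
Variables (i l : 'I_n) (e : E) (p : 'I_k).
Hypotheses (il : i != l) (ei : e \in X i) (el : e \in X l).
Hypotheses (hCi : has_circuit i) (hCl : has_circuit l).
Hypotheses (ci : edge_color i = p) (cl : edge_color l = p).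

Let meet_il x : x \in X i -> x \in X l -> x = e.
Proof. by move=> xi xl; apply: meet_eq il xi ei xl el. Qed.

Let nl_i x : x \in X i -> N p [set x] = 1.
Proof. by rewrite -ci; apply: edge_color_nonloop. Qed.

Let nl_l x : x \in X l -> N p [set x] = 1.
Proof. by rewrite -cl; apply: edge_color_nonloop. Qed.

Section WideEdge.
Hypothesis t2 : 2 <= t i.

Section CrossPair.
Variables (s u : E) (S : {set E}).
Hypotheses (si : s \in X i) (se : s != e) (ul : u \in X l) (ue : u != e).
Hypotheses (par_su : parallel (N p) s u) (tl2 : 2 <= t l).
Hypotheses (sSi : S \subset X i :\: [set e; s]) (cS : #|S| = (t i).-1).

Local Notation B := (e |: S).
Local Notation A := (u |: (e |: S)).

Let ui : u \notin X i.
Proof. by apply: contra ue => ui; rewrite (meet_il ui ul). Qed.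

Let su : s != u. Proof. by apply: contraTneq si => ->. Qed.
Let Si : S \subset X i. Proof. exact: subset_trans sSi (subsetDl _ _). Qed.
Let eS : e \notin S. Proof. by apply/negP => /(subsetP sSi); rewrite !inE eqxx. Qed.
Let sS : s \notin S. Proof. by apply/negP => /(subsetP sSi); rewrite !inE eqxx orbT. Qed.
Let Bi : B \subset X i. Proof. by rewrite subUset sub1set ei Si. Qed.
Let cB : #|B| = t i. Proof. by rewrite cardsU1 eS cS add1n prednK // ltnW. Qed.
Let uB : u \notin B. Proof. by apply: contra ui => /(subsetP Bi). Qed.
Let sB : s \notin B. Proof. by rewrite !inE negb_or se. Qed.

Let AiB : A :&: X i \subset B.
Proof. by apply/subsetP => x /setIP [/setU1P [-> | xB] xi] //; move: ui; rewrite xi. Qed.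

Lemma cross_set_defect : 0 < defect (N p) A.
Proof.
have nlA : {in A, forall x, N p [set x] = 1}.
  by move=> x /setU1P [-> | /(subsetP Bi)]; [apply: nl_l | apply: nl_i].
have sBi : s |: B \subset X i by rewrite subUset sub1set si Bi.
have rsB : N p (s |: B) = t i by rewrite -ci edge_color_rank // cardsU1 sB cB.
rewrite defect_nonloops // cardsU1 uB cB subn_gt0 ltnS -rsB.
apply: leq_trans (rank_mono (N_matroid p) _)
  (rank_setU1_parallel (N_matroid p) (setU11 s B) par_su).
exact/setUS/subsetUr.
Qed.

Lemma cross_set_agree : agree_set A.
Proof.
have [q0 [sq0 uq0 tq0 _]] := parallel_edge su par_su.
have iq0 : i != q0 by apply: contraTneq uq0 => <-.
have Bq0 x : x \in B -> x \notin X q0.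
  by move=> xB; apply: contraNN sB => xq0; rewrite -(meet_eq iq0 (subsetP Bi _ xB) si xq0 sq0).
right; right; right; exists i, q0; split.
- by apply/set0Pn; exists s; rewrite inE si sq0.
- apply/subsetP => x /setU1P [-> | xB]; first by rewrite !inE uq0 (negPf ui) orbT.
  by rewrite !inE (negPf (Bq0 x xB)) (subsetP Bi _ xB).
- by rewrite -cB subset_leq_card // AiB.
rewrite tq0 -(cards1 u); apply/subset_leq_card/subsetP => x /setIP [/setU1P [-> | xB] xq0].
  exact: set11.
by rewrite (negPf (Bq0 x xB)) in xq0.
Qed.

Lemma cross_set_excess q : 0 < excess q A -> [/\ excess q A <= 1, t q = 1,
  edge_color q != p, X q :&: S != set0 & X q :&: [set u] != set0].
Proof.
move=> exq.
have qi : q != i.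
  by apply: contraTneq exq => ->; rewrite -leqNgt leqn0 excess0 // -cB subset_leq_card // AiB.
have ql : q != l.
  apply: contraTneq exq => ->; rewrite -leqNgt leqn0 excess0 //; apply: leq_trans tl2.
  have c2 : #|[set e; u]| = 2 by rewrite cards2 eq_sym ue.
  rewrite -c2; apply/subset_leq_card/subsetP => x.
  move=> /setIP [/setU1P [-> | xB] xl]; first by rewrite !inE eqxx orbT.
  by rewrite (meet_il (subsetP Bi _ xB) xl) !inE eqxx.
have uq1 : #|[set u] :&: X q| <= 1 by rewrite -(cards1 u) subset_leq_card ?subsetIl.
have [tq ex1 /set0Pn [u' /setIP [/set1P -> uq]] /set0Pn [x /setIP [xB xq]]] :=
  excess_setU_gt0 uq1 (card_meet_le1 qi Bi) exq.
have xe : x != e.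
  apply: contraNneq ql => xe; rewrite xe in xq.
  by apply/eqP; apply: pair_edge_uniq ue uq xq ul el.
have xS : x \in S by move: xB; rewrite !inE (negPf xe).
split => //.
- apply/eqP => cq.
  have par_xs : parallel (N p) x s.
    apply: (@parallel_trans _ _ (N_matroid p) u); last by rewrite parallel_sym.
    rewrite -cq; apply: edge_color_parallel tq xq uq _.
    by apply: contraNneq uB => <-.
  have xs : x != s by apply: contraNneq sS => <-.
  by rewrite (negPf (no_parallel_in_edge _ (subsetP Si _ xS) si xs t2)) in par_xs.
- by apply/set0Pn; exists x; rewrite inE xq xS.
by apply/set0Pn; exists u; rewrite inE uq set11.
Qed.

End CrossPair.

Lemma cross_parallel_contra s u : s \in X i -> s != e -> u \in X l -> u != e ->
  ~~ parallel (N p) s u.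
Proof.
move=> si se ul ue; apply/negP => par_su.
have [tl2 | tl1] := leqP 2 (t l); last first.
  have tl : t l = 1 by apply/eqP; rewrite eqn_leq -ltnS tl1 t_gt0.
  have par_ue : parallel (N p) u e by rewrite -cl; apply: edge_color_parallel.
  have := no_parallel_in_edge p si ei se t2.
  by rewrite (parallel_trans (N_matroid p) par_su par_ue).
have [S sSi cS] : exists2 S : {set E}, S \subset X i :\: [set e; s] & #|S| = (t i).-1.
  apply: exists_subset_card; rewrite cardsDS ?subUset ?sub1set ?ei ?si // cards2 eq_sym se.
  rewrite leq_subRL; last exact: leq_trans t2 (ltnW hCi).
  by rewrite add2n prednK // ltnW.
apply: (@excess_pairs_contra (u |: (e |: S)) p i S [set u] _ _ _ _ _ t2).
- by apply: (@cross_set_agree s).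
- exact: subset_trans (subsetU1 e S) (subsetU1 u _).
- by rewrite sub1set setU11.
- rewrite disjoint_sym disjoints1; apply: contra ue => /(subsetP sSi) /setDP [ui _].
  by rewrite (meet_il ui ul).
- exact: subset_trans sSi (subsetDl _ _).
- by apply: (@cross_set_defect s).
- by move=> q; apply: (@cross_set_excess s).
Qed.

Section SplitSet.
Variables (S T : {set E}).
Hypotheses (sSi : S \subset X i :\ e) (cS : #|S| = t i).
Hypotheses (sTl : T \subset X l :\ e) (cT : #|T| = t l).

Let Si : S \subset X i. Proof. exact: subset_trans sSi (subD1set _ _). Qed.
Let Tl : T \subset X l. Proof. exact: subset_trans sTl (subD1set _ _). Qed.
Let eS : e \notin S. Proof. by apply/negP => /(subsetP sSi); rewrite !inE eqxx. Qed.
Let eT : e \notin T. Proof. by apply/negP => /(subsetP sTl); rewrite !inE eqxx. Qed.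

Lemma split_set_disjoint : [disjoint S & T].
Proof.
rewrite -setI_eq0; apply/eqP/setP => x; rewrite !inE; apply/andP.
move=> -[/(subsetP sSi) /setD1P [xe xi] /(subsetP sTl) /setD1P [_ xl]].
by rewrite (meet_il xi xl) eqxx in xe.
Qed.

Let AiS : (S :|: T) :&: X i \subset S.
Proof.
apply/subsetP => x /setIP [/setUP [// | xT] xi].
by case/negP: eT; rewrite -(meet_il xi (subsetP Tl _ xT)).
Qed.

Let AlT : (S :|: T) :&: X l \subset T.
Proof.
apply/subsetP => x /setIP [/setUP [xS | //] xl].
by case/negP: eS; rewrite -(meet_il (subsetP Si _ xS) xl).
Qed.

Lemma split_set_defect : 0 < defect (N p) (S :|: T).
Proof.
have nlA : {in S :|: T, forall x, N p [set x] = 1}.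
  by move=> x /setUP [/(subsetP Si) | /(subsetP Tl)]; [apply: nl_i | apply: nl_l].
have rS : N p (e |: S) = t i.
  by rewrite -ci edge_color_rank ?cardsU1 ?eS ?cS // subUset sub1set ei Si.
have rT : N p (e |: T) = t l.
  by rewrite -cl edge_color_rank ?cardsU1 ?eT ?cT // subUset sub1set el Tl.
have submod := rank_submod (N_matroid p) (e |: S) (e |: T).
have rI : 1 <= N p ((e |: S) :&: (e |: T)).
  by rewrite -(nl_i ei) rank_mono // subsetI !sub1set !setU11.
have rA : N p (S :|: T) <= N p ((e |: S) :|: (e |: T)).
  exact: (rank_mono (N_matroid p)) (setUSS (subsetU1 e S) (subsetU1 e T)).
have cA : #|S :|: T| = t i + t l.
  by rewrite cardsU (disjoint_setI0 split_set_disjoint) cards0 subn0 cS cT.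
rewrite defect_nonloops // cA subn_gt0; apply: (leq_ltn_trans rA).
by rewrite -rS -rT; apply: leq_trans submod; rewrite -addn1 leq_add2l.
Qed.

Lemma split_set_agree : agree_set (S :|: T).
Proof.
right; right; right; exists i, l; split.
- by apply/set0Pn; exists e; rewrite inE ei el.
- apply/subsetP => x /setUP [xS | xT].
    have xl : x \notin X l by apply: contra eS => xl; rewrite -(meet_il (subsetP Si _ xS) xl).
    by rewrite !inE xl (subsetP Si _ xS).
  have xi : x \notin X i by apply: contra eT => xi; rewrite -(meet_il xi (subsetP Tl _ xT)).
  by rewrite !inE xi (subsetP Tl _ xT) orbT.
- by rewrite -cS subset_leq_card // AiS.
by rewrite -cT subset_leq_card // AlT.
Qed.

Lemma split_set_excess q : 0 < excess q (S :|: T) -> [/\ excess q (S :|: T) <= 1, t q = 1,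
  edge_color q != p, X q :&: S != set0 & X q :&: T != set0].
Proof.
move=> exq.
have qi : q != i.
  by apply: contraTneq exq => ->; rewrite -leqNgt leqn0 excess0 // -cS subset_leq_card // AiS.
have ql : q != l.
  by apply: contraTneq exq => ->; rewrite -leqNgt leqn0 excess0 // -cT subset_leq_card // AlT.
have [tq ex1 Sq Tq] := excess_setU_gt0 (card_meet_le1 qi Si) (card_meet_le1 ql Tl) exq.
split; rewrite 1?setIC //; apply/eqP => cq.
have /set0Pn [x /setIP [xS xq]] := Sq; have /set0Pn [y /setIP [yT yq]] := Tq.
have xy : x != y by apply: contraTneq yT => <-; rewrite (disjointFr split_set_disjoint xS).
have xe : x != e by apply: contraNneq eS => <-.
have ye : y != e by apply: contraNneq eT => <-.
have := cross_parallel_contra (subsetP Si _ xS) xe (subsetP Tl _ yT) ye.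
by rewrite -cq edge_color_parallel.
Qed.

End SplitSet.

Lemma wide_edge_contra : False.
Proof.
have [S sSi cS] : exists2 S : {set E}, S \subset X i :\ e & #|S| = t i.
  by apply: exists_subset_card; move: hCi; rewrite /has_circuit (cardsD1 e (X i)) ei.
have [T sTl cT] : exists2 T : {set E}, T \subset X l :\ e & #|T| = t l.
  by apply: exists_subset_card; move: hCl; rewrite /has_circuit (cardsD1 e (X l)) el.
apply: (@excess_pairs_contra (S :|: T) p i S T _ _ _ _ _ t2).
- by apply: split_set_agree.
- exact: subsetUl.
- exact: subsetUr.
- exact: split_set_disjoint.
- exact: subset_trans sSi (subD1set _ _).
- by apply: split_set_defect.
- by move=> q; apply: split_set_excess.
Qed.

End WideEdge.
End AdjacentEdges.

Section Triangle.
Variables (i1 i2 i3 : 'I_n) (a b c h : E) (p : 'I_k).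
Hypotheses (i12 : i1 != i2) (i13 : i1 != i3) (i23 : i2 != i3).
Hypotheses (a1 : a \in X i1) (b1 : b \in X i1) (h1 : h \in X i1).
Hypotheses (a2 : a \in X i2) (c2 : c \in X i2) (b3 : b \in X i3) (c3 : c \in X i3).
Hypotheses (ab : a != b) (ac : a != c) (bc : b != c) (ha : h != a) (hb : h != b).
Hypotheses (t1 : t i1 = 1) (t2 : t i2 = 1) (t3 : t i3 = 1).
Hypotheses (col1 : edge_color i1 = p) (col2 : edge_color i2 = p).

Let c1 : c \notin X i1. Proof. by apply: contra ac => c1; rewrite (meet_eq i12 a1 c1 a2 c2). Qed.
Let h2 : h \notin X i2. Proof. by apply: contra ha => h2; rewrite (meet_eq i12 h1 a1 h2 a2). Qed.
Let h3 : h \notin X i3. Proof. by apply: contra hb => h3; rewrite (meet_eq i13 h1 b1 h3 b3). Qed.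
Let a3 : a \notin X i3. Proof. by apply: contra ab => a3; rewrite (meet_eq i13 a1 b1 a3 b3). Qed.
Let b2 : b \notin X i2. Proof. by apply: contra ab => b2; rewrite (meet_eq i12 a1 b1 a2 b2). Qed.
Let hc : h != c. Proof. by apply: contraNneq c1 => <-. Qed.

Let nl1 x : x \in X i1 -> N p [set x] = 1.
Proof. by rewrite -col1; apply/edge_color_nonloop/(has_circuit_pair ab a1 b1 t1). Qed.

Let pac : parallel (N p) a c. Proof. by rewrite -col2 edge_color_parallel. Qed.
Let pab : parallel (N p) a b. Proof. by rewrite -col1 edge_color_parallel. Qed.
Let pah : parallel (N p) a h. Proof. by rewrite -col1 edge_color_parallel // eq_sym. Qed.

Let phc : parallel (N p) h c.
Proof. by apply: (@parallel_trans _ _ (N_matroid p) a) => //; rewrite parallel_sym. Qed.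

Section FourthEdge.
Variable i4 : 'I_n.
Hypotheses (h4 : h \in X i4) (c4 : c \in X i4) (t4 : t i4 = 1).

Let i14 : i1 != i4. Proof. by apply: contraNneq c1 => ->. Qed.
Let i24 : i2 != i4. Proof. by apply: contraNneq h2 => ->. Qed.
Let i34 : i3 != i4. Proof. by apply: contraNneq h3 => ->. Qed.
Let a4 : a \notin X i4. Proof. by apply: contra ha => a4; rewrite (meet_eq i14 h1 a1 h4 a4). Qed.
Let b4 : b \notin X i4. Proof. by apply: contra hb => b4; rewrite (meet_eq i14 h1 b1 h4 b4). Qed.

Local Notation A := (h |: (c |: [set a; b])).

Let inA x : x \in A = [|| x == h, x == c, x == a | x == b].
Proof. by rewrite !inE. Qed.

Let hA : h \in A. Proof. by rewrite inA eqxx. Qed.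
Let cA : c \in A. Proof. by rewrite inA eqxx orbT. Qed.
Let aA : a \in A. Proof. by rewrite inA eqxx !orbT. Qed.
Let bA : b \in A. Proof. by rewrite inA eqxx !orbT. Qed.

Let cardA : #|A| = 4.
Proof.
by rewrite cardsU1 (cardsU1 c) cards2 ab !inE !negb_or hc ha hb (eq_sym c a) (eq_sym c b) ac bc.
Qed.

Let nlA : {in A, forall x, N p [set x] = 1}.
Proof.
move=> x; rewrite inA => /or4P [] /eqP ->; try exact: nl1.
by case/and3P: pac => _ /eqP.
Qed.

Let rank_quad B : B \subset A -> N p B <= 1.
Proof.
move=> sBA; have /and3P [/eqP ra _ _] := pab.
apply: leq_trans (rank_mono (N_matroid p) (subset_trans sBA (subsetUr [set a] A))) _.
rewrite -ra; apply: (rank_setU_spanned (N_matroid p)) => x.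
rewrite inA => /or4P [] /eqP ->.
- exact (rank_setU1_parallel (N_matroid p) (set11 a) pah).
- exact (rank_setU1_parallel (N_matroid p) (set11 a) pac).
- by rewrite setUid.
- exact (rank_setU1_parallel (N_matroid p) (set11 a) pab).
Qed.

Lemma quad_pair_edge x y : x \in A -> y \in A -> x != y ->
  exists2 m, m \in [:: i1; i2; i3; i4] & (x \in X m) && (y \in X m).
Proof.
rewrite !inA => /or4P [] /eqP -> /or4P [] /eqP -> xy; rewrite ?eqxx // in xy;
  first [ by exists i1; rewrite ?inE ?eqxx ?h1 ?a1 ?b1
        | by exists i2; rewrite ?inE ?eqxx ?orbT ?a2 ?c2
        | by exists i3; rewrite ?inE ?eqxx ?orbT ?b3 ?c3
        | by exists i4; rewrite ?inE ?eqxx ?orbT ?h4 ?c4 ].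
Qed.

Lemma excess_sum_quad B : B \subset A ->
  excess_sum B = excess i1 B + excess i2 B + excess i3 B + excess i4 B.
Proof.
move=> sBA; have uniq_F : uniq [:: i1; i2; i3; i4].
  by rewrite /= !inE !negb_or i12 i13 i14 i23 i24 i34.
have out0 q : q \notin [:: i1; i2; i3; i4] -> excess q B = 0.
  move=> qF; apply/excess0/(leq_trans _ (t_gt0 q))/card_le1_eqP.
  move=> x y /setIP [xB xq] /setIP [yB yq]; apply/eqP; apply: contraT => xy.
  have [m mF /andP [ym xm]] := quad_pair_edge (subsetP sBA _ yB) (subsetP sBA _ xB) xy.
  by rewrite (pair_edge_uniq xy yq xq ym xm) mF in qF.
rewrite /excess_sum (bigID (mem [:: i1; i2; i3; i4])) /=.
have -> : \sum_(q | q \notin [:: i1; i2; i3; i4]) excess q B = 0 by rewrite big1.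
by rewrite addn0 -big_uniq // !big_cons big_nil /= addn0 !addnA.
Qed.

Let quad_agree : agree_set A.
Proof.
right; left; split; first exact: cardA.
exists i1, i2, i3; split; first by rewrite i12 i13 i23.
split; first by split.
exists h; first by rewrite inA eqxx.
split; first by rewrite /cnt3 h1 (negPf h2) (negPf h3).
move=> y; rewrite inA /cnt3 => /or4P [] /eqP -> yh.
- by rewrite eqxx in yh.
- by rewrite (negPf c1) c2 c3.
- by rewrite a1 a2 (negPf a3).
by rewrite b1 (negPf b2) b3.
Qed.

Let quad_meet_sub m (P : {set E}) :
  {in A, forall x, x \in X m -> x \in P} -> A :&: X m \subset P.
Proof. by move=> AP; apply/subsetP => x /setIP [xA xm]; apply: AP. Qed.

Let excess_quad_le5 : excess_sum A <= 5.
Proof.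
have e1 : excess i1 A <= 2.
  apply: (excess_le (P := h |: [set a; b])); last first.
    by rewrite t1 cardsU1 cards2 ab !inE negb_or ha hb.
  apply: quad_meet_sub => x; rewrite inA => /or4P [] /eqP -> xm; rewrite ?inE ?eqxx ?orbT //.
  by move: c1; rewrite xm.
have e2 : excess i2 A <= 1.
  apply: (excess_le (P := [set a; c])); last by rewrite t2 cards2 ac.
  apply: quad_meet_sub => x; rewrite inA => /or4P [] /eqP -> xm; rewrite ?inE ?eqxx ?orbT //.
    by move: h2; rewrite xm.
  by move: b2; rewrite xm.
have e3 : excess i3 A <= 1.
  apply: (excess_le (P := [set b; c])); last by rewrite t3 cards2 bc.
  apply: quad_meet_sub => x; rewrite inA => /or4P [] /eqP -> xm; rewrite ?inE ?eqxx ?orbT //.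
    by move: h3; rewrite xm.
  by move: a3; rewrite xm.
have e4 : excess i4 A <= 1.
  apply: (excess_le (P := [set h; c])); last by rewrite t4 cards2 hc.
  apply: quad_meet_sub => x; rewrite inA => /or4P [] /eqP -> xm; rewrite ?inE ?eqxx ?orbT //.
    by move: a4; rewrite xm.
  by move: b4; rewrite xm.
by rewrite excess_sum_quad //; apply: leq_trans (leq_add (leq_add (leq_add e1 e2) e3) e4) _.
Qed.

Let defect_quad : 3 <= defect (N p) A.
Proof. by rewrite defect_nonloops // cardA; exact: (leq_sub2l 4 (rank_quad (subxx A))). Qed.

(* The pair already carries a unit of defect in colour [p], and no more. *)
Lemma quad_pair_defect j x y : j != p -> x \in A -> y \in A -> x != y ->
  defect (N j) [set x; y] = 0.
Proof.
move=> jp xA yA xy; have pj : p != j by rewrite eq_sym.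
have sxyA : [set x; y] \subset A by rewrite subUset !sub1set xA yA.
have nlxy : {in [set x; y], forall z, N p [set z] = 1}.
  by move=> z /(subsetP sxyA); apply: nlA.
have dp : 0 < defect (N p) [set x; y].
  by rewrite defect_nonloops // cards2 xy subn_gt0 ltnS rank_quad.
apply/eqP; rewrite -leqn0 -(leq_add2l (defect (N p) [set x; y])) addn0.
apply: leq_trans (leq_term2_sum (fun j => defect (N j) [set x; y]) pj) _.
rewrite sum_defect_agree; last by apply: agree_set_small; rewrite cards2 xy.
exact: leq_trans (excess_sum_pair_le1 x y) dp.
Qed.

Lemma quad_triple_nonloop j T x : j != p -> T \subset A -> #|T| = 3 ->
  0 < defect (N j) T -> x \in T -> N j [set x] = 1.
Proof.
move=> jp sTA cT dT xT; have := rank_set1_le1 (N_matroid j) x.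
case rx: (N j [set x]) => [|[|//]] _ //; have := defect_setD1_loop (N_matroid j) xT rx.
have /cards2P [y [z [yz eTx]]] : #|T :\ x| == 2.
  by move: cT; rewrite (cardsD1 x) xT add1n => -[->].
have inTx v : v \in [set y; z] -> v \in A by rewrite -eTx => /setD1P [_ /(subsetP sTA)].
rewrite eTx quad_pair_defect ?inTx ?set21 ?set22 //.
by rewrite leqNgt dT.
Qed.

(* Two triples of the same colour [j != p] sharing two points span rank two,
   which forces defect in [j] on the triple [{h, a, b}] of [X i1], whose
   excess is already used up by [p]. *)
Lemma quad_two_triples_contra j T T' x y : j != p ->
  T \subset A -> T' \subset A -> #|T| = 3 -> #|T'| = 3 -> h |: [set a; b] \subset T :|: T' ->
  x != y -> x \in T -> y \in T -> x \in T' -> y \in T' ->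
  0 < defect (N j) T -> 0 < defect (N j) T' -> False.
Proof.
move=> jp sTA sT'A cT cT' sT0U xy xT yT xT' yT' dT dT'.
have nlT := quad_triple_nonloop jp sTA cT dT.
have nlT' := quad_triple_nonloop jp sT'A cT' dT'.
have rT : N j T <= 2 by move: dT; rewrite defect_nonloops // cT subn_gt0 ltnS.
have rT' : N j T' <= 2 by move: dT'; rewrite defect_nonloops // cT' subn_gt0 ltnS.
have rxy : 2 <= N j [set x; y].
  have nlxy : {in [set x; y], forall z, N j [set z] = 1} by move=> z /set2P [] ->; apply: nlT.
  have := quad_pair_defect jp (subsetP sTA _ xT) (subsetP sTA _ yT) xy.
  by rewrite defect_nonloops // cards2 xy => /eqP; rewrite subn_eq0.
have rI : 2 <= N j (T :&: T').
  apply: leq_trans rxy (rank_mono (N_matroid j) _).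
  by rewrite subsetI !subUset !sub1set xT yT xT' yT'.
have rU : N j (T :|: T') <= 2.
  rewrite -(leq_add2r 2); apply: leq_trans (leq_add (leqnn _) rI) _.
  exact: leq_trans (rank_submod (N_matroid j) T T') (leq_add rT rT').
have sT0A : h |: [set a; b] \subset A by apply/setUS/subsetU1.
have sT0i1 : h |: [set a; b] \subset X i1 by rewrite !subUset !sub1set h1 a1 b1.
have cT0 : #|h |: [set a; b]| = 3 by rewrite cardsU1 cards2 ab !inE negb_or ha hb.
have dj : 0 < defect (N j) (h |: [set a; b]).
  rewrite defect_nonloops => [|z /(subsetP sT0U) /setUP [/nlT | /nlT'] //].
  by rewrite cT0 subn_gt0 ltnS (leq_trans (rank_mono (N_matroid j) sT0U) rU).
have dp : 2 <= defect (N p) (h |: [set a; b]).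
  rewrite defect_nonloops => [|z /(subsetP sT0A) /nlA //].
  by rewrite cT0; exact: (leq_sub2l 3 (rank_quad sT0A)).
have pj : p != j by rewrite eq_sym.
have := leq_term2_sum (fun j => defect (N j) (h |: [set a; b])) pj.
rewrite sum_defect_agree ?(excess_sum_edge sT0i1) ?cT0 ?t1.
  by move/(leq_trans (leq_add dp dj)).
by apply: agree_set_small; rewrite cT0.
Qed.

Lemma quad_triple_other_color T : T \subset A -> #|T| = 3 -> 3 <= excess_sum T ->
  exists2 j, j != p & 0 < defect (N j) T.
Proof.
move=> sTA cT exT; apply: (@exists_pos_other _ (fun j => defect (N j) T) p 2).
  rewrite defect_nonloops => [|z /(subsetP sTA) /nlA //].
  have /set0Pn [x xT] : T != set0 by rewrite -card_gt0 cT.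
  have rT : 1 <= N p T by rewrite -(nlA (subsetP sTA _ xT)) rank_mono // sub1set.
  by rewrite cT; exact: (leq_sub2l 3 rT).
by rewrite sum_defect_agree //; apply: agree_set_small; rewrite cT.
Qed.

Lemma quad_c_triple_color x y m1 m2 m3 : x \in A -> y \in A -> x != y -> c != x -> c != y ->
  m1 != m2 -> m1 != m3 -> m2 != m3 -> x \in X m1 -> y \in X m1 -> c \in X m2 -> x \in X m2 ->
  c \in X m3 -> y \in X m3 -> t m1 = 1 -> t m2 = 1 -> t m3 = 1 ->
  exists2 j, j != p & 0 < defect (N j) (c |: [set x; y]).
Proof.
move=> xA yA xy cx cy m12 m13 m23 xm1 ym1 cm2 xm2 cm3 ym3 tm1 tm2 tm3.
apply: quad_triple_other_color; first by rewrite !subUset !sub1set cA xA yA.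
  by rewrite cardsU1 cards2 xy !inE negb_or cx cy.
have cM : #|m1 |: [set m2; m3]| = 3 by rewrite cardsU1 cards2 m23 !inE negb_or m12 m13.
rewrite -[3]cM /excess_sum; apply: card_le_sum => m /setU1P [-> | /set2P [] ->].
- by apply: (excess_ge1 xy _ _ xm1 ym1 tm1); rewrite !inE eqxx ?orbT.
- by apply: (excess_ge1 cx _ _ cm2 xm2 tm2); rewrite !inE eqxx ?orbT.
by apply: (excess_ge1 cy _ _ cm3 ym3 tm3); rewrite !inE eqxx ?orbT.
Qed.

Lemma quad_three_colors_contra j1 j2 j3 : j1 != j2 -> j1 != j3 -> j2 != j3 ->
  j1 != p -> j2 != p -> j3 != p ->
  0 < defect (N j1) A -> 0 < defect (N j2) A -> 0 < defect (N j3) A -> False.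
Proof.
move=> j12 j13 j23 j1p j2p j3p d1 d2 d3.
have pS : p \notin j1 |: [set j2; j3].
  by rewrite !inE !negb_or (eq_sym p j1) (eq_sym p j2) (eq_sym p j3) j1p j2p j3p.
have cS : #|j1 |: [set j2; j3]| = 3 by rewrite cardsU1 cards2 j23 !inE negb_or j12 j13.
have dS : {in j1 |: [set j2; j3], forall j, 0 < defect (N j) A}.
  by move=> j /setU1P [-> | /set2P [] ->].
have := @leq_add_card_sum _ (fun j => defect (N j) A) p _ pS dS.
rewrite cS (sum_defect_agree quad_agree) => le_exc.
by have := leq_trans (leq_add defect_quad (leqnn 3)) (leq_trans le_exc excess_quad_le5).
Qed.

(* The three triples through [c] need three further colours. *)
Lemma triangle_fourth_contra : False.
Proof.
have ca : c != a by rewrite eq_sym.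
have cb : c != b by rewrite eq_sym.
have ch : c != h by rewrite eq_sym.
have ah : a != h by rewrite eq_sym.
have bh : b != h by rewrite eq_sym.
have [j1 j1p d1] := quad_c_triple_color aA bA ab ca cb i12 i13 i23 a1 b1 c2 a2 c3 b3 t1 t2 t3.
have [j2 j2p d2] := quad_c_triple_color aA hA ah ca ch i12 i14 i24 a1 h1 c2 a2 c4 h4 t1 t2 t4.
have [j3 j3p d3] := quad_c_triple_color bA hA bh cb ch i13 i14 i34 b1 h1 c3 b3 c4 h4 t1 t3 t4.
have sub3 x y : x \in A -> y \in A -> c |: [set x; y] \subset A.
  by move=> xA yA; rewrite !subUset !sub1set cA xA yA.
have card3 x y : x != y -> c != x -> c != y -> #|c |: [set x; y]| = 3.
  by move=> xy cx cy; rewrite cardsU1 cards2 xy !inE negb_or cx cy.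
have sT1A := sub3 _ _ aA bA; have sT2A := sub3 _ _ aA hA; have sT3A := sub3 _ _ bA hA.
have same_color_contra j j' T T' x : j = j' -> j != p -> T \subset A -> T' \subset A ->
    #|T| = 3 -> #|T'| = 3 -> h |: [set a; b] \subset T :|: T' -> x != c ->
    x \in T -> c \in T -> x \in T' -> c \in T' ->
    0 < defect (N j) T -> 0 < defect (N j') T' -> False.
  by move=> <-; apply: quad_two_triples_contra.
have j12 : j1 != j2.
  apply/eqP => j12; apply: (same_color_contra _ _ _ _ a j12 j1p sT1A sT2A _ _ _ ac _ _ _ _ d1 d2);
    by rewrite ?card3 // ?subUset ?sub1set ?inE ?eqxx ?orbT.
have j13 : j1 != j3.
  apply/eqP => j13; apply: (same_color_contra _ _ _ _ b j13 j1p sT1A sT3A _ _ _ bc _ _ _ _ d1 d3);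
    by rewrite ?card3 // ?subUset ?sub1set ?inE ?eqxx ?orbT.
have j23 : j2 != j3.
  apply/eqP => j23; apply: (same_color_contra _ _ _ _ h j23 j2p sT2A sT3A _ _ _ hc _ _ _ _ d2 d3);
    by rewrite ?card3 // ?subUset ?sub1set ?inE ?eqxx ?orbT.
apply: (quad_three_colors_contra j12 j13 j23 j1p j2p j3p).
- exact: leq_trans d1 (defect_mono (N_matroid _) sT1A).
- exact: leq_trans d2 (defect_mono (N_matroid _) sT2A).
exact: leq_trans d3 (defect_mono (N_matroid _) sT3A).
Qed.

End FourthEdge.

Lemma triangle_contra : False.
Proof.
have [i4 [h4 c4 t4 _]] := parallel_edge hc phc.
exact: (@triangle_fourth_contra i4).
Qed.

End Triangle.

Lemma unit_triangle_contra i l q e s u p : i != l -> i != q -> l != q ->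
  e != s -> e != u -> s != u ->
  e \in X i -> s \in X i -> e \in X l -> u \in X l -> s \in X q -> u \in X q ->
  t i = 1 -> t l = 1 -> t q = 1 ->
  edge_color i = p -> edge_color l = p -> edge_color q = p -> False.
Proof.
move=> il iq lq es eu su ei si el ul sq uq ti tl tq ci cl cq.
have [Xi | /(exists_third ei si) [h hi /andP [he hs]]] := eqVneq (X i) [set e; s]; last first.
  exact: (@triangle_contra i l q e s u h p).
have [Xl | /(exists_third el ul) [h hl /andP [he hu]]] := eqVneq (X l) [set e; u]; last first.
  by apply: (@triangle_contra l i q e u s h p); rewrite // eq_sym.
have [Xq | /(exists_third sq uq) [h hq /andP [hs hu]]] := eqVneq (X q) [set s; u]; last first.
  by apply: (@triangle_contra q i l s u e h p); rewrite // eq_sym.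
by apply: no_triangle; exists e, s, u; split; [rewrite es eu su | exists i, l, q].
Qed.

Lemma edge_color_adjacent_neq i l e : i != l -> has_circuit i -> has_circuit l ->
  e \in X i -> e \in X l -> edge_color i != edge_color l.
Proof.
move=> il hCi hCl ei el; apply/eqP => cil.
have [ti2 | ti1] := leqP 2 (t i); first exact: (@wide_edge_contra i l e (edge_color i)).
have [tl2 | tl1] := leqP 2 (t l).
  by apply: (@wide_edge_contra l i e (edge_color l)); rewrite // eq_sym.
have ti : t i = 1 by apply/eqP; rewrite eqn_leq -ltnS ti1 t_gt0.
have tl : t l = 1 by apply/eqP; rewrite eqn_leq -ltnS tl1 t_gt0.
have other q : has_circuit q -> t q = 1 -> e \in X q -> exists2 s, s \in X q & s != e.
  move=> hCq tq eq; have /set0Pn [s /setD1P [se sq]] : X q :\ e != set0.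
    by rewrite -card_gt0; move: hCq; rewrite /has_circuit tq (cardsD1 e) eq add1n ltnS.
  by exists s.
have [s si se] := other i hCi ti ei; have [u ul ue] := other l hCl tl el.
have ui : u \notin X i by apply: contra ue => ui; rewrite (meet_eq il ui ei ul el).
have sl : s \notin X l by apply: contra se => sl; rewrite (meet_eq il si ei sl el).
have su : s != u by apply: contraNneq ui => <-.
have par_su : parallel (N (edge_color i)) s u.
  apply: (@parallel_trans _ _ (N_matroid _) e); first by apply: edge_color_parallel.
  by rewrite cil edge_color_parallel // eq_sym.
have [q [sq uq tq cq]] := parallel_edge su par_su.
have iq : i != q by apply: contraNneq ui => ->.
have lq : l != q by apply: contraNneq sl => ->.
apply: (unit_triangle_contra il iq lq _ _ su ei si el ul sq uq ti tl tq (erefl _) (esym cil) cq).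
  by rewrite eq_sym.
by rewrite eq_sym.
Qed.

(** * The colouring of the line graph *)

Definition circuit_edges_at e := [set l | has_circuit l && (e \in X l)].

Definition singleton_color i :=
  if [pick x in X i] is Some e then
    odflt (Ordinal k_gt0) [pick j in nonloop_colors e :\: edge_color @: circuit_edges_at e]
  else Ordinal k_gt0.

(* The colours used by the hyperedges with circuits through [e] are fewer than
   the [w e] colours in which [e] is not a loop, since [X i] itself has none. *)
Lemma singleton_colorP i e : ~~ has_circuit i -> X i = [set e] ->
  singleton_color i \in nonloop_colors e :\: edge_color @: circuit_edges_at e.
Proof.
move=> noCi Xi; rewrite /singleton_color.
case: pickP => [x | /(_ e)]; last by rewrite Xi set11.
rewrite Xi => /set1P ->; case: pickP => [j // | none]; exfalso.
have : #|edge_color @: circuit_edges_at e| < #|nonloop_colors e|.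
  rewrite card_nonloop_colors; apply: leq_ltn_trans (leq_imset_card _ _) _.
  apply: proper_card; rewrite properEneq; apply/andP; split.
    apply: contraNneq noCi => eq_sets.
    have : i \in [set l | e \in X l] by rewrite inE Xi set11.
    by rewrite -eq_sets inE => /andP [].
  by apply/subsetP => l; rewrite !inE => /andP [].
have := cardsID (edge_color @: circuit_edges_at e) (nonloop_colors e).
rewrite (eq_card0 none) addn0 => <-.
by rewrite ltnNge (subset_leq_card (subsetIr _ _)).
Qed.

Definition line_color i := if has_circuit i then edge_color i else singleton_color i.

Lemma line_color_nonloop i x : x \in X i -> N (line_color i) [set x] = 1.
Proof.
rewrite /line_color; case: ifP => [hCi | /negbT noCi] xi; first exact: edge_color_nonloop.
by case/setDP: (singleton_colorP noCi (no_circuit_set1 noCi xi)); rewrite inE => /eqP.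
Qed.

Lemma line_color_proper : proper_coloring X line_color.
Proof.
have mixed i l e : has_circuit i -> ~~ has_circuit l -> e \in X i -> e \in X l ->
    edge_color i != singleton_color l.
  move=> hCi noCl ei el.
  have /setDP [_ notC] := singleton_colorP noCl (no_circuit_set1 noCl el).
  by apply: contraNneq notC => <-; apply/imsetP; exists i; rewrite // inE hCi ei.
move=> i l /andP [il /set0Pn [e /setIP [ei el]]]; rewrite /line_color.
case: ifPn => hCi; case: ifPn => hCl.
- exact: edge_color_adjacent_neq il hCi hCl ei el.
- exact: mixed hCi hCl ei el.
- by rewrite eq_sym; apply: mixed hCl hCi el ei.
by rewrite -(X_inj (etrans (no_circuit_set1 hCi ei) (esym (no_circuit_set1 hCl el)))) eqxx in il.
Qed.

Lemma line_color_adjacent_neq i l x : i != l -> x \in X i -> x \in X l ->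
  line_color i != line_color l.
Proof.
move=> il xi xl; apply: line_color_proper.
by rewrite /lg_adj il; apply/set0Pn; exists x; rewrite inE xi xl.
Qed.

(* Points of two hyperedges of one colour [j] are not parallel in [N j]:
   otherwise they span a third hyperedge of colour [j] adjacent to both. *)
Lemma line_color_rank2 i l : i != l -> line_color i = line_color l ->
  2 <= N (line_color i) setT.
Proof.
move=> il cil; have [x xi] := set0Pn _ (X_neq0 i); have [y yl] := set0Pn _ (X_neq0 l).
have yi : y \notin X i.
  by apply/negP => yi; have := line_color_adjacent_neq il yi yl; rewrite cil eqxx.
have xy : x != y by apply: contraNneq yi => <-.
have rx := line_color_nonloop xi.
have ry : N (line_color i) [set y] = 1 by rewrite cil; apply: line_color_nonloop.
apply: leq_trans (rank_mono (N_matroid _) (subsetT [set x; y])).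
rewrite leqNgt; apply/negP => rxy.
have [|q [xq yq tq cq]] := parallel_edge xy (_ : parallel (N (line_color i)) x y).
  by rewrite /parallel rx ry !eqxx.
have lq : line_color q = line_color i by rewrite /line_color (has_circuit_pair xy xq yq tq).
have qi : q != i by apply: contraNneq yi => <-.
by have := line_color_adjacent_neq qi xq xi; rewrite lq eqxx.
Qed.

Lemma sum_rank_ge_classes : c1 line_color + 2 * c2p line_color <= \sum_j N j setT.
Proof.
rewrite /c1 /c2p !card_set_sum big_distrr /= -big_split /=; apply: leq_sum => j _.
have [-> // | S_gt0] := posnP #|[set h | line_color h == j]|.
have [S2 | S1] := leqP 2 #|[set h | line_color h == j]|.
  have /card_gt1P [h [h' [+ + hh']]] := S2; rewrite !inE => /eqP hj /eqP h'j.
  rewrite gtn_eqF // muln1 add0n -hj; apply: line_color_rank2 hh' _.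
  by rewrite hj h'j.
have -> : #|[set h | line_color h == j]| == 1 by rewrite eqn_leq -ltnS S1 S_gt0.
have /set0Pn [h /[!inE] /eqP hj] : [set h | line_color h == j] != set0 by rewrite -card_gt0.
have [x xh] := set0Pn _ (X_neq0 h).
rewrite -hj; apply: leq_trans (rank_mono (N_matroid _) (subsetT [set x])).
by rewrite line_color_nonloop.
Qed.

Lemma nonloop_line_color j x : N j [set x] = 1 -> exists2 h, x \in X h & line_color h = j.
Proof.
move=> rx; set H := [set h | x \in X h].
have sub : line_color @: H \subset nonloop_colors x.
  by apply/subsetP => _ /imsetP [h /[!inE] xh ->]; rewrite line_color_nonloop.
have inj : {in H &, injective line_color}.
  move=> h h' /[!inE] xh xh' chh'; apply/eqP; apply: contraT => hh'.
  by have := line_color_adjacent_neq hh' xh xh'; rewrite chh' eqxx.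
have eqM : line_color @: H = nonloop_colors x.
  by apply/eqP; rewrite eqEcard sub card_in_imset // card_nonloop_colors; apply: leqnn.
have : j \in line_color @: H by rewrite eqM inE rx.
by case/imsetP => h /[!inE] xh ->; exists h.
Qed.

Lemma line_color_rank i : N (line_color i) (X i) <= t i.
Proof.
rewrite /line_color; case: ifPn => [hCi | noCi]; last first.
  have [e ei] := set0Pn _ (X_neq0 i).
  apply: leq_trans (rank_le_card (N_matroid _) _) _.
  by rewrite (no_circuit_set1 noCi ei) cards1 t_gt0.
have [C sCi cC] := exists_subset_card (ltnW hCi).
have rC : N (edge_color i) C <= t i by rewrite -cC rank_le_card.
apply: leq_trans (rank_mono (N_matroid _) (subsetUr C (X i))) _.
apply: leq_trans (rank_setU_spanned (N_matroid _) _) rC => x xi.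
have [xC | xC] := boolP (x \in C); first by rewrite (setUidPr _) // sub1set.
have sxCi : x |: C \subset X i by rewrite subUset sub1set xi sCi.
rewrite edge_color_rank ?cardsU1 ?xC ?cC // (rank_small sCi) ?cC //.
by move=> y yC; apply: edge_color_nonloop hCi (subsetP sCi _ yC).
Qed.

Lemma rank_le_phi j A : N j A <= phi_rank X t line_color j A.
Proof.
set Y := \bigcup_(h | line_color h == j) (A :&: X h).
have sYA : Y \subset A by apply/bigcupsP => h _; apply: subsetIl.
apply: leq_trans (rank_le_setD (N_matroid j) sYA) _.
have -> : nonloops (N j) (A :\: Y) = 0.
  apply: big1 => x /setDP [xA xY]; have := rank_set1_le1 (N_matroid j) x.
  case rx: (N j [set x]) => [//|[|//]] _.
  have [h xh hj] := nonloop_line_color rx.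
  by move: xY; rewrite (subsetP (bigcup_sup h (_ : line_color h == j))) ?hj // inE xA xh.
rewrite addn0; apply: leq_trans (rank_bigcup_le (N_matroid j) _ _) _.
apply: leq_sum => h /eqP hj; rewrite leq_min rank_le_card //=.
by apply: leq_trans (rank_mono (N_matroid j) (subsetIr _ _)) _; rewrite -hj line_color_rank.
Qed.

Lemma rank_eq_phi : (forall A, \sum_j N j A = rho X t A) ->
  forall j A, N j A = phi_rank X t line_color j A.
Proof.
move=> sumN_rho j A; apply: (@eq_terms_leq_sum _ (N^~ A) (fun j => phi_rank X t line_color j A)).
  by move=> j'; apply: rank_le_phi.
by rewrite sumN_rho sum_phi_rank.
Qed.

End Decomposition.
End Hypergraph.

Section ChromaticNumber.
Variables (E : finType) (n : nat) (X : 'I_n -> {set E}).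

Lemma chi_le_card_colors m (c : 'I_n -> 'I_m) : proper_coloring X c -> chi X <= #|c @: setT|.
Proof.
move=> c_proper; rewrite /chi; case: ex_minnP => K _; apply; apply/existsP.
exists [ffun i => enum_rank_in (imset_f c (in_setT i)) (c i)].
apply/forallP => i; apply/forallP => l; apply/implyP => adj; rewrite !ffunE.
apply: contra (c_proper i l adj) => /eqP/enum_rank_in_inj -> //; exact: imset_f.
Qed.

Lemma card_colors_le m (c : 'I_n -> 'I_m) : #|c @: setT| <= c1 c + c2p c.
Proof.
apply: leq_trans (leq_card_setU _ _); apply/subset_leq_card/subsetP => _ /imsetP [i _ ->].
have : 0 < #|[set h | c h == c i]| by rewrite card_gt0; apply/set0Pn; exists i; rewrite inE.
by rewrite !inE; case: #|_| => [|[|]].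
Qed.

Lemma chi_le_n : chi X <= n.
Proof.
apply: leq_trans (@chi_le_card_colors n id _) _; first by move=> i l /andP [].
by apply: leq_trans (max_card _) _; rewrite card_ord.
Qed.

End ChromaticNumber.

Import Order.TTheory GRing.Theory Num.Theory.
Local Open Scope ring_scope.

Section MainTheorem.
Variables (E : finType) (n : nat) (X : 'I_n -> {set E}) (t : 'I_n -> nat).
Hypothesis X_neq0 : forall i, X i != set0.
Hypothesis X_inj : injective X.
Hypothesis meet_le1 : forall i j, i != j -> (#|X i :&: X j| <= 1)%N.
Hypothesis no_triangle : ~ exists a b c : E, [/\ a != b, a != c & b != c] /\
  exists i j l, [/\ X i = [set a; b], X j = [set a; c] & X l = [set b; c]].
Hypothesis t_spec : forall i, t i = 1%N \/
  ((exists2 e, e \in X i & (w X e <= t i)%N) /\ (t i < #|X i|)%N).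
Variable sigma : {set E} -> int.
Hypothesis sigma_agree : forall A, agree_set X t A -> sigma A = (rho X t A)%:Z.

Lemma sumN_agree_Delta k (N : 'I_k -> {set E} -> nat) : in_Delta sigma N ->
  forall A, agree_set X t A -> (\sum_(j < k) N j A)%N = rho X t A.
Proof. by case=> _ sumN A agA; have := sigma_agree agA; rewrite sumN => -[]. Qed.

Lemma Delta_line_coloring k (k_gt0 : (0 < k)%N) N : in_Delta sigma N ->
  proper_coloring X (line_color X t N k_gt0) /\
  ((c1 (line_color X t N k_gt0) + 2 * c2p (line_color X t N k_gt0))%N%:Z <= sigma setT).
Proof.
move=> DN; have [N_matroid sumN] := DN; have sumN_agree := sumN_agree_Delta DN.
split; first exact: line_color_proper.
by rewrite sumN lez_nat; apply: sum_rank_ge_classes.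
Qed.

Lemma Delta_rho_phi : (forall A, sigma A = (rho X t A)%:Z) ->
  forall k (k_gt0 : (0 < k)%N) (N : 'I_k -> {set E} -> nat), in_Delta sigma N <->
  exists c : 'I_n -> 'I_k, proper_coloring X c /\
    (forall (i : 'I_k) (A : {set E}), N i A = phi_rank X t c i A).
Proof.
move=> sigma_rho k k_gt0 N; split=> [DN | [c [c_proper Nphi]]].
  have [N_matroid sumN] := DN; have sumN_agree := sumN_agree_Delta DN.
  exists (line_color X t N k_gt0); split; first exact: line_color_proper.
  by apply: rank_eq_phi => // A; have := sigma_rho A; rewrite sumN => -[].
split=> [j | A].
  have [le_card mono submod] := phi_rank_matroid t j c_proper.
  by split=> [A | A B sAB | A B]; rewrite !Nphi; [apply: le_card | apply: mono | apply: submod].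
rewrite sigma_rho -(sum_phi_rank X t c A); congr Posz.
by apply: eq_bigr => j _; rewrite Nphi.
Qed.

Lemma indecomposable_lt_chi : sigma setT < (chi X)%:Z -> indecomposable sigma.
Proof.
move=> lt_chi [m [N DN]].
have [m0 | m_gt0] := posnP m.
  have sigma0 A : sigma A = 0.
    by case: DN => _ ->; rewrite big1 // => -[j lt_jm] _; exfalso; move: lt_jm; rewrite m0.
  have [n0 | n_gt0] := posnP n.
    by move: lt_chi; rewrite sigma0 ltz_nat ltnNge (leq_trans (chi_le_n X)) ?n0.
  have [e ei] := set0Pn _ (X_neq0 (Ordinal n_gt0)).
  have agree_e : agree_set X t [set e] by left; rewrite /cond_a cards1.
  have := sigma_agree agree_e; rewrite sigma0 (rho_set1 t_spec) /w => -[] /esym /eqP.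
  rewrite -leqn0 leqNgt card_gt0 => /negP; apply; apply/set0Pn.
  by exists (Ordinal n_gt0); rewrite inE.
have [c_proper c_le] := Delta_line_coloring m_gt0 DN.
have := le_lt_trans c_le lt_chi; rewrite ltz_nat.
have := chi_le_card_colors c_proper; have := card_colors_le (line_color X t N m_gt0).
lia.
Qed.

End MainTheorem.

Theorem theorem2p9 (E : finType) (n : nat) (X : 'I_n -> {set E}) (t : 'I_n -> nat)
  (HXne : forall i, X i != set0)
  (HXinj : injective X)
  (Ht : forall i, (t i <= #|X i|)%N)
  (H2 : forall i j : 'I_n, i != j -> (#|X i :&: X j| <= 1)%N)
  (H3 : ~ exists a b c : E, [/\ a != b, a != c & b != c] /\
          exists i j l : 'I_n, [/\ X i = [set a; b], X j = [set a; c] & X l = [set b; c]])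
  (HT : forall i, t i = 1%N \/
          ((exists2 e, e \in X i & (w X e <= t i)%N) /\ (t i < #|X i|)%N))
  (sigma : {set E} -> int)
  (Hpoly : polymatroid sigma)
  (Hagree : forall A : {set E},
     cond_a A \/ cond_b X t A \/ cond_c X t A \/ cond_d X t A ->
     sigma A = (rho X t A)%:Z) :
  (forall k : nat, (0 < k)%N -> forall N : 'I_k -> {set E} -> nat, in_Delta sigma N ->
     exists c : 'I_n -> 'I_k, proper_coloring X c /\
       ((c1 c + 2 * c2p c)%N)%:Z <= sigma setT)
  /\
  ((forall A, sigma A = (rho X t A)%:Z) ->
     forall k : nat, (0 < k)%N -> forall N : 'I_k -> {set E} -> nat,
       in_Delta sigma N <->
       exists c : 'I_n -> 'I_k, proper_coloring X c /\
         (forall (i : 'I_k) (A : {set E}), N i A = phi_rank X t c i A))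
  /\
  (sigma setT < (chi X)%:Z -> indecomposable sigma).
Proof.
split.
  move=> k k_gt0 N DN; exists (line_color X t N k_gt0).
  exact: (Delta_line_coloring HXne HXinj H2 H3 HT Hagree).
split; first exact: (Delta_rho_phi HXne HXinj H2 H3 HT).
exact: (indecomposable_lt_chi HXne HXinj H2 H3 HT Hagree).
Qed.
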